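(* Let $\mathcal{T}$ be a simplicial tree and $G \leq \mathrm{Aut}(\mathcal{T})$. Suppose that the action of $G$ on $\mathcal{T}$ is minimal and of general type, and that the action of $G$ on $\partial \mathcal{T}$ is not topologically free. Then $G$ satisfies a non-trivial mixed identity.
   Context: The action of $G$ on $\mathcal{T}$ is minimal if there is no proper $G$-invariant subtree, and of general type if $G$ contains two hyperbolic elements (elements acting as non-trivial translations along a bi-infinite geodesic) whose axes have no common endpoint. $\partial\mathcal{T}$ is the space of ends with its usual topology; the action on $\partial\mathcal{T}$ is topologically free if the fixed point set of every non-trivial element has empty interior. For $w \in G \ast \mathbb{Z}$, $G$ satisfies the mixed identity $w=1$ if every homomorphism $G \ast \mathbb{Z} \to G$ restricting to the identity on $G$ sends $w$ to $1$; it is non-trivial if $w \neq 1$ in $G \ast \mathbb{Z}$. *)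

From Stdlib Require Import ZArith List Arith.
Open Scope Z_scope.

Section Trees.
Variable V : Type.
Variable adj : V -> V -> Prop.

Definition walk_in (P : V -> Prop) (a b : V) : Prop :=
  exists (n : nat) (p : nat -> V), p 0%nat = a /\ p n = b /\
    (forall i, (i < n)%nat -> adj (p i) (p (S i))) /\
    (forall i, (i <= n)%nat -> P (p i)).

Definition is_tree : Prop :=
  inhabited V /\
  (forall u v, adj u v -> adj v u) /\
  (forall v, ~ adj v v) /\
  (forall u v, walk_in (fun _ => True) u v) /\
  (forall (n : nat) (p : nat -> V), (1 <= n)%nat -> p 0%nat = p n ->
     (forall i, (i < n)%nat -> adj (p i) (p (S i))) ->
     exists i, (i + 2 <= n)%nat /\ p i = p (i + 2)%nat).

Definition is_aut (f : V -> V) : Prop :=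
  (forall u v, adj u v <-> adj (f u) (f v)) /\
  (forall u v, f u = f v -> u = v) /\ (forall v, exists u, f u = v).

Definition nontriv (f : V -> V) : Prop := exists v, f v <> v.

Definition is_aut_subgroup (G : (V -> V) -> Prop) : Prop :=
  (forall g, G g -> is_aut g) /\
  G (fun v => v) /\
  (forall g h, G g -> G h -> G (fun v => g (h v))) /\
  (forall g, G g -> exists h, G h /\ forall v, h (g v) = v /\ g (h v) = v).

Definition is_subtree (S : V -> Prop) : Prop :=
  (exists v, S v) /\ (forall u v, S u -> S v -> walk_in S u v).

Definition minimal_action (G : (V -> V) -> Prop) : Prop :=
  ~ exists S : V -> Prop, is_subtree S /\
      (forall g v, G g -> S v -> S (g v)) /\ (exists v, ~ S v).

Definition is_ray (r : nat -> V) : Prop :=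
  (forall n, adj (r n) (r (S n))) /\ (forall m n, r m = r n -> m = n).

(* two rays define the same end iff they eventually coincide up to shift *)
Definition ray_equiv (r r' : nat -> V) : Prop :=
  exists a b : nat, forall n, r (a + n)%nat = r' (b + n)%nat.

Definition is_line (c : Z -> V) : Prop :=
  (forall n, adj (c n) (c (n + 1))) /\ (forall m n, c m = c n -> m = n).

Definition line_plus (c : Z -> V) : nat -> V := fun n => c (Z.of_nat n).
Definition line_minus (c : Z -> V) : nat -> V := fun n => c (- Z.of_nat n).

Definition is_axis (g : V -> V) (c : Z -> V) : Prop :=
  is_line c /\ exists k : Z, k <> 0 /\ forall n, g (c n) = c (n + k).

Definition hyperbolic (g : V -> V) : Prop := exists c, is_axis g c.

Definition general_type (G : (V -> V) -> Prop) : Prop :=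
  exists g1 g2 c1 c2, G g1 /\ G g2 /\ is_axis g1 c1 /\ is_axis g2 c2 /\
    forall e1 e2, (e1 = line_plus c1 \/ e1 = line_minus c1) ->
                  (e2 = line_plus c2 \/ e2 = line_minus c2) ->
                  ~ ray_equiv e1 e2.

(* topology on the space of ends: the basic neighbourhoods of the end of r are,
   for each vertex v, the ends lying in the same component of T - v as r. *)
Definition same_comp_end (v : V) (r r' : nat -> V) : Prop :=
  exists m n : nat,
    (forall k, (m <= k)%nat -> r k <> v) /\
    (forall k, (n <= k)%nat -> r' k <> v) /\
    walk_in (fun x => x <> v) (r m) (r' n).

Definition ends_open (U : (nat -> V) -> Prop) : Prop :=
  forall r, is_ray r -> U r -> exists v,
    forall r', is_ray r' -> same_comp_end v r r' -> U r'.

Definition fixes_end (g : V -> V) (r : nat -> V) : Prop :=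
  ray_equiv (fun n => g (r n)) r.

Definition fix_has_interior (g : V -> V) : Prop :=
  exists U : (nat -> V) -> Prop, ends_open U /\
    (exists r, is_ray r /\ U r) /\
    (forall r, is_ray r -> U r -> fixes_end g r).

Definition topologically_free (G : (V -> V) -> Prop) : Prop :=
  forall g, G g -> nontriv g -> ~ fix_has_interior g.

(* mixed identities: elements of G * Z in normal form
   g0 x^{n1} g1 x^{n2} ... x^{nk} gk, with all ni <> 0 and g1..g(k-1) <> 1.
   Represented as g0 and the list [(n1,g1); ...; (nk,gk)]. *)
Definition zpow (h hi : V -> V) (n : Z) (v : V) : V :=
  if (0 <=? n) then Nat.iter (Z.to_nat n) h v else Nat.iter (Z.to_nat (- n)) hi v.

Fixpoint eval_tail (h hi : V -> V) (l : list (Z * (V -> V))) (v : V) : V :=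
  match l with
  | nil => v
  | (n, g) :: t => zpow h hi n (g (eval_tail h hi t v))
  end.

(* image of the word under the homomorphism G*Z -> G that is the identity on G
   and sends the generator x to h (hi = h^-1) *)
Definition eval_word (h hi : V -> V) (g0 : V -> V) (l : list (Z * (V -> V)))
  (v : V) : V := g0 (eval_tail h hi l v).

Fixpoint reduced_tail (l : list (Z * (V -> V))) : Prop :=
  match l with
  | nil => True
  | (n, g) :: nil => n <> 0
  | (n, g) :: t => n <> 0 /\ nontriv g /\ reduced_tail t
  end.

Definition satisfies_nontrivial_mixed_identity (G : (V -> V) -> Prop) : Prop :=
  exists (g0 : V -> V) (l : list (Z * (V -> V))),
    G g0 /\ (forall p, In p l -> G (snd p)) /\ reduced_tail l /\
    (l <> nil \/ nontriv g0) /\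
    forall h hi, G h -> G hi -> (forall v, h (hi v) = v /\ hi (h v) = v) ->
      forall v, eval_word h hi g0 l v = v.

End Trees.

From Stdlib Require Import Arith ZArith List Lia Classical ClassicalEpsilon.
Import ListNotations.
Open Scope nat_scope.

(* Let g in G be nontrivial with a fixed-point set of nonempty interior in the
   boundary.  Around a branch vertex of a half-tree all of whose ends g fixes, three
   fixed ends pin the vertex and the rays through it then pin a whole half-tree.
   Minimality and general type put an axis of some hyperbolic b in G inside every
   half-tree, so g is supported in a half-tree H hanging off the axis of b, and H, bH
   are disjoint.  Two half-trees are nested, disjoint or cover the tree; hence for
   every h in G one of hH, hbH misses one of H, bH, and the corresponding conjugates
   of g and bgb^-1 commute.  An iterated commutator of the four commutators
   [F_i, x F_j x^-1] (F_1 = g, F_2 = bgb^-1), separated by b and b^2, is therefore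
   a mixed identity; its normal form is reduced because every interior letter is
   some F_i^{+-1} or translates the axis of b. *)

(** * Words in [G * Z] *)

Section Words.
Variable V : Type.

Definition inverse_pair (a a' : V -> V) : Prop := forall z, a (a' z) = z /\ a' (a z) = z.
Definition commute (a b : V -> V) : Prop := forall z, a (b z) = b (a z).

(* A word g0 x^n1 g1 ... x^nk gk in the normal form of [satisfies_nontrivial_mixed_identity];
   [wmul] multiplies normal forms by composing the two letters of [G] that meet. *)
Definition word : Type := ((V -> V) * list (Z * (V -> V)))%type.

Definition weval (h hi : V -> V) (w : word) : V -> V := eval_word V h hi (fst w) (snd w).

Fixpoint tail_app (p : Z * (V -> V)) (t : list (Z * (V -> V))) (g : V -> V)
  (l : list (Z * (V -> V))) : list (Z * (V -> V)) :=
  match t with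
  | [] => (fst p, fun v => snd p (g v)) :: l
  | p' :: t' => p :: tail_app p' t' g l
  end.

Definition wmul (w w' : word) : word :=
  match snd w with
  | [] => (fun v => fst w (fst w' v), snd w')
  | p :: t => (fst w, tail_app p t (fst w') (snd w'))
  end.

Definition wconst (g : V -> V) : word := (g, []).
Definition wx : word := (fun v => v, [(1%Z, fun v => v)]).
Definition wxinv : word := (fun v => v, [((-1)%Z, fun v => v)]).

Lemma eval_tail_app h hi p t g l v :
  eval_tail V h hi (tail_app p t g l) v = eval_tail V h hi (p :: t) (g (eval_tail V h hi l v)).
Proof.
  revert p; induction t as [|p' t IH]; intros [n k]; simpl; [reflexivity|].
  rewrite IH. reflexivity.
Qed.

Lemma weval_mul h hi w w' v : weval h hi (wmul w w') v = weval h hi w (weval h hi w' v).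
Proof.
  destruct w as [g0 [|p t]]; unfold wmul, weval, eval_word; simpl; [reflexivity|].
  rewrite eval_tail_app. reflexivity.
Qed.

(* Words travel with their inverses, so commutators and conjugates never invert a word. *)
Definition wcomm (p q : word * word) : word * word :=
  (wmul (fst p) (wmul (fst q) (wmul (snd p) (snd q))),
   wmul (fst q) (wmul (fst p) (wmul (snd q) (snd p)))).

Definition wconj (t p : word * word) : word * word :=
  (wmul (fst t) (wmul (fst p) (snd t)), wmul (fst t) (wmul (snd p) (snd t))).

Definition wconj_x (p : word * word) : word * word := wconj (wx, wxinv) p.

Section Evaluation.
Variables h hi : V -> V.

Definition weval_inverse (p : word * word) : Prop :=
  inverse_pair (weval h hi (fst p)) (weval h hi (snd p)).
Definition weval_trivial (w : word) : Prop := forall v, weval h hi w v = v.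

Lemma weval_inverse_const g g' : inverse_pair g g' -> weval_inverse (wconst g, wconst g').
Proof. auto. Qed.

Lemma weval_inverse_x : inverse_pair h hi -> weval_inverse (wx, wxinv).
Proof. auto. Qed.

Lemma weval_inverse_comm p q :
  weval_inverse p -> weval_inverse q -> weval_inverse (wcomm p q).
Proof.
  intros Hp Hq z. simpl. rewrite !weval_mul.
  split; repeat (rewrite (proj1 (Hp _)) || rewrite (proj2 (Hp _))
              || rewrite (proj1 (Hq _)) || rewrite (proj2 (Hq _))); reflexivity.
Qed.

Lemma weval_inverse_conj t p :
  weval_inverse t -> weval_inverse p -> weval_inverse (wconj t p).
Proof.
  intros Ht Hp z. simpl. rewrite !weval_mul.
  split; repeat (rewrite (proj1 (Ht _)) || rewrite (proj2 (Ht _))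
              || rewrite (proj1 (Hp _)) || rewrite (proj2 (Hp _))); reflexivity.
Qed.

Lemma weval_trivial_inverse p :
  weval_inverse p -> weval_trivial (fst p) -> weval_trivial (snd p).
Proof. intros Hp H1 z. rewrite <- (H1 (weval h hi (snd p) z)). apply Hp. Qed.

Lemma weval_trivial_comm_l p q :
  weval_inverse p -> weval_trivial (fst p) -> weval_inverse q -> weval_trivial (fst (wcomm p q)).
Proof.
  intros Hp H1 Hq z. pose proof (weval_trivial_inverse p Hp H1) as H2.
  simpl. rewrite !weval_mul, H1, H2. apply Hq.
Qed.

Lemma weval_trivial_comm_r p q :
  weval_inverse p -> weval_inverse q -> weval_trivial (fst q) -> weval_trivial (fst (wcomm p q)).
Proof.
  intros Hp Hq H1 z. pose proof (weval_trivial_inverse q Hq H1) as H2.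
  simpl. rewrite !weval_mul, H2, H1. apply Hp.
Qed.

Lemma weval_trivial_comm_commute p q :
  weval_inverse p -> weval_inverse q ->
  commute (weval h hi (fst p)) (weval h hi (fst q)) -> weval_trivial (fst (wcomm p q)).
Proof.
  intros Hp Hq Hc z. simpl. rewrite !weval_mul, Hc, (proj1 (Hp _)). apply Hq.
Qed.

Lemma weval_trivial_conj t p :
  weval_inverse t -> weval_trivial (fst p) -> weval_trivial (fst (wconj t p)).
Proof. intros Ht Hp z. simpl. rewrite !weval_mul, Hp. apply Ht. Qed.

End Evaluation.

Definition word_over (P : (V -> V) -> Prop) (w : word) : Prop :=
  P (fst w) /\ forall p, In p (snd w) -> P (snd p).

Section WordOver.
Variable P : (V -> V) -> Prop.
Hypothesis P_id : P (fun v => v).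
Hypothesis P_comp : forall g k, P g -> P k -> P (fun v => g (k v)).

Definition pair_over (p : word * word) : Prop := word_over P (fst p) /\ word_over P (snd p).

Lemma tail_app_over p t g l :
  (forall r, In r (p :: t) -> P (snd r)) -> P g -> (forall r, In r l -> P (snd r)) ->
  forall r, In r (tail_app p t g l) -> P (snd r).
Proof.
  revert p; induction t as [|p' t IH]; intros p Ht Hg Hl r [E|Hr].
  - subst r. simpl. apply P_comp; [apply Ht; left|]; auto.
  - auto.
  - subst r. apply Ht. left. reflexivity.
  - apply (IH p'); auto. intros r' Hr'. apply Ht. right. exact Hr'.
Qed.

Lemma word_over_mul w w' : word_over P w -> word_over P w' -> word_over P (wmul w w').
Proof.
  destruct w as [g0 [|p t]]; intros [H0 Ht] [H0' Ht']; unfold word_over, wmul; simpl in *.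
  - split; [apply P_comp|]; auto.
  - split; [exact H0|]. apply tail_app_over; auto.
Qed.

Lemma pair_over_const g g' : P g -> P g' -> pair_over (wconst g, wconst g').
Proof. intros Hg Hg'. split; split; simpl; tauto. Qed.

Lemma pair_over_x : pair_over (wx, wxinv).
Proof. split; split; simpl; auto; intros p [E|[]]; subst p; exact P_id. Qed.

Lemma pair_over_comm p q : pair_over p -> pair_over q -> pair_over (wcomm p q).
Proof. intros [Hp Hp'] [Hq Hq']. split; simpl; repeat apply word_over_mul; auto. Qed.

Lemma pair_over_conj t p : pair_over t -> pair_over p -> pair_over (wconj t p).
Proof. intros [Ht Ht'] [Hp Hp']. split; simpl; repeat apply word_over_mul; auto. Qed.

End WordOver.

Lemma inverse_pair_comp a a' b b' : inverse_pair a a' -> inverse_pair b b' ->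
  inverse_pair (fun v => a (b v)) (fun v => b' (a' v)).
Proof.
  intros Ha Hb z. split.
  - rewrite (proj1 (Hb _)). apply Ha.
  - rewrite (proj2 (Ha _)). apply Hb.
Qed.

Lemma inverse_pair_fix a a' z : inverse_pair a a' -> a z = z -> a' z = z.
Proof. intros H E. rewrite <- E at 1. apply H. Qed.

Lemma inverse_pair_nontriv a a' : inverse_pair a a' -> nontriv V a -> nontriv V a'.
Proof.
  intros H [z Hz]. exists z. intros E. apply Hz. rewrite <- E at 1. apply H.
Qed.

Lemma inverse_pair_shift a a' (l : Z -> V) (k : Z) : inverse_pair a a' ->
  (forall n, a (l n) = l (n + k)%Z) -> forall n, a' (l n) = l (n - k)%Z.
Proof.
  intros H Ha n. rewrite <- (proj2 (H (l (n - k)%Z))), Ha. do 2 f_equal. lia.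
Qed.

Section Law.
Variables F1 F1' F2 F2' T T' S S' : V -> V.

Let pF1 := (wconst F1, wconst F1').
Let pF2 := (wconst F2, wconst F2').
Let pT := (wconst T, wconst T').
Let pS := (wconst S, wconst S').

(* [law] is [[c11, T c12 T'], S [c21, T c22 T'] S'] with [cij = [Fi, x Fj x^-1]]; it is
   trivial as soon as one [cij] is. *)
Definition law_commutators (pFi : word * word) : word * word :=
  wcomm (wcomm pFi (wconj_x pF1)) (wconj pT (wcomm pFi (wconj_x pF2))).

Definition law : word := fst (wcomm (law_commutators pF1) (wconj pS (law_commutators pF2))).

Section LawTrivial.
Variables h hi : V -> V.
Hypothesis I1 : inverse_pair F1 F1'.
Hypothesis I2 : inverse_pair F2 F2'.
Hypothesis IT : inverse_pair T T'.
Hypothesis IS : inverse_pair S S'.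
Hypothesis Ih : inverse_pair h hi.

Lemma weval_inverse_law_commutators pFi :
  weval_inverse h hi pFi -> weval_inverse h hi (law_commutators pFi).
Proof.
  intros HFi.
  repeat first [ assumption | apply weval_inverse_comm | apply weval_inverse_conj
               | apply weval_inverse_x | apply weval_inverse_const ].
Qed.

Lemma law_commutators_trivial pFi : weval_inverse h hi pFi ->
  commute (weval h hi (fst pFi)) (fun v => h (F1 (hi v))) \/
  commute (weval h hi (fst pFi)) (fun v => h (F2 (hi v))) ->
  weval_trivial h hi (fst (law_commutators pFi)).
Proof.
  intros HFi Hc.
  assert (IX : forall g g', inverse_pair g g' -> weval_inverse h hi (wconj_x (wconst g, wconst g'))).
  { intros g g' Hg. apply weval_inverse_conj; [apply weval_inverse_x|apply weval_inverse_const]; auto. }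
  assert (IC : forall g g', inverse_pair g g' -> weval_inverse h hi (wcomm pFi (wconj_x (wconst g, wconst g')))).
  { intros g g' Hg. apply weval_inverse_comm; auto. }
  assert (ICT : weval_inverse h hi (wconj pT (wcomm pFi (wconj_x pF2)))).
  { apply weval_inverse_conj; [apply weval_inverse_const|apply IC]; auto. }
  destruct Hc as [Hc|Hc].
  - apply weval_trivial_comm_l; [apply IC; exact I1| |exact ICT].
    apply weval_trivial_comm_commute; [exact HFi|apply IX; exact I1|exact Hc].
  - apply weval_trivial_comm_r; [apply IC; exact I1|exact ICT|].
    apply weval_trivial_conj; [apply weval_inverse_const; exact IT|].
    apply weval_trivial_comm_commute; [exact HFi|apply IX; exact I2|exact Hc].
Qed.

Lemma law_trivial :
  commute F1 (fun v => h (F1 (hi v))) \/ commute F1 (fun v => h (F2 (hi v))) \/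
  commute F2 (fun v => h (F1 (hi v))) \/ commute F2 (fun v => h (F2 (hi v))) ->
  weval_trivial h hi law.
Proof.
  intros Hc.
  assert (L1 := weval_inverse_law_commutators pF1 (weval_inverse_const h hi _ _ I1)).
  assert (L2 := weval_inverse_law_commutators pF2 (weval_inverse_const h hi _ _ I2)).
  assert (LS : weval_inverse h hi (wconj pS (law_commutators pF2))).
  { apply weval_inverse_conj; [apply weval_inverse_const|]; auto. }
  destruct Hc as [Hc|[Hc|Hc]].
  1, 2: apply weval_trivial_comm_l; [exact L1| |exact LS];
    apply law_commutators_trivial; [apply weval_inverse_const; exact I1|tauto].
  apply weval_trivial_comm_r; [exact L1|exact LS|].
  apply weval_trivial_conj; [apply weval_inverse_const; exact IS|].
  apply law_commutators_trivial; [apply weval_inverse_const; exact I2|tauto].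
Qed.

End LawTrivial.

Lemma law_over (P : (V -> V) -> Prop) :
  P (fun v => v) -> (forall g k, P g -> P k -> P (fun v => g (k v))) ->
  P F1 -> P F1' -> P F2 -> P F2' -> P T -> P T' -> P S -> P S' ->
  word_over P law.
Proof.
  intros Pid Pcomp PF1 PF1' PF2 PF2' PT PT' PS PS'.
  refine (proj1 (pair_over_comm P Pcomp _ _ _ _));
    repeat first [ apply pair_over_comm | apply pair_over_conj | apply pair_over_x
                 | apply pair_over_const ]; assumption.
Qed.

Lemma law_reduced (l : Z -> V) (K : Z) :
  K <> 0%Z -> (forall m n, l m = l n -> m = n) ->
  inverse_pair F1 F1' -> inverse_pair F2 F2' -> inverse_pair T T' -> inverse_pair S S' ->
  (forall n, F1 (l n) = l n) -> (forall n, F2 (l n) = l n) ->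
  (forall n, T (l n) = l (n + K)%Z) -> (forall n, S (l n) = l (n + 2 * K)%Z) ->
  nontriv V F1 -> nontriv V F2 ->
  reduced_tail V (snd law).
Proof.
  intros HK Hl I1 I2 IT IS E1 E3 E5 E7 N1 N3.
  assert (E2 : forall n, F1' (l n) = l n) by (intros; apply (inverse_pair_fix F1); auto).
  assert (E4 : forall n, F2' (l n) = l n) by (intros; apply (inverse_pair_fix F2); auto).
  assert (E6 := inverse_pair_shift T T' l K IT E5).
  assert (E8 := inverse_pair_shift S S' l _ IS E7).
  assert (N2 := inverse_pair_nontriv F1 F1' I1 N1).
  assert (N4 := inverse_pair_nontriv F2 F2' I2 N3).
  (* Each interior letter is some [Fi^{+-1}] or moves [l] by a nonzero multiple of [K]. *)
  cbn. repeat split; try discriminate;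
  first [ exact N1 | exact N2 | exact N3 | exact N4
        | exists (l 0%Z); cbv beta;
          repeat first [ rewrite E1 | rewrite E2 | rewrite E3 | rewrite E4
                       | rewrite E5 | rewrite E6 | rewrite E7 | rewrite E8 ];
          intros X; apply Hl in X; lia ].
Qed.

End Law.
End Words.

Lemma exists_nat_crossing (P : nat -> Prop) n :
  P 0 -> ~ P n -> exists j, j < n /\ P j /\ ~ P (S j).
Proof.
  induction n as [|n IH]; intros H0 Hn; [contradiction|].
  destruct (classic (P n)) as [X|X].
  - exists n. auto.
  - destruct (IH H0 X) as [j Hj]. exists j. split; [lia|tauto].
Qed.

Lemma exists_Z_crossing (Q : Z -> Prop) m n : Q m -> ~ Q n ->
  exists j, (Q j /\ ~ Q (j + 1)%Z) \/ (~ Q j /\ Q (j + 1)%Z).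
Proof.
  intros Hm Hn. destruct (Z.le_gt_cases m n) as [Hmn|Hmn].
  - destruct (exists_nat_crossing (fun i => Q (m + Z.of_nat i)%Z) (Z.to_nat (n - m)))
      as [j [_ [J1 J2]]].
    + rewrite Z.add_0_r. exact Hm.
    + replace (m + Z.of_nat (Z.to_nat (n - m)))%Z with n by lia. exact Hn.
    + exists (m + Z.of_nat j)%Z. left. replace (m + Z.of_nat j + 1)%Z with (m + Z.of_nat (S j))%Z by lia.
      auto.
  - destruct (exists_nat_crossing (fun i => Q (m - Z.of_nat i)%Z) (Z.to_nat (m - n)))
      as [j [_ [J1 J2]]].
    + rewrite Z.sub_0_r. exact Hm.
    + replace (m - Z.of_nat (Z.to_nat (m - n)))%Z with n by lia. exact Hn.
    + exists (m - Z.of_nat (S j))%Z. right. replace (m - Z.of_nat (S j) + 1)%Z with (m - Z.of_nat j)%Z by lia.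
      auto.
Qed.

Lemma exists_argmin {A : Type} (f : A -> nat) (x0 : A) : exists x, forall y, f x <= f y.
Proof.
  destruct (dec_inh_nat_subset_has_unique_least_element (fun k => exists x, f x = k))
    as [k [[[x Hx] Hk] _]].
  - intros k. apply classic.
  - exists (f x0), x0. reflexivity.
  - exists x. intros y. rewrite Hx. apply Hk. exists y. reflexivity.
Qed.

Definition meets {T : Type} (X Y : T -> Prop) : Prop := exists z, X z /\ Y z.
Definition nested_or_covering {T : Type} (X Y : T -> Prop) : Prop :=
  (forall z, X z -> Y z) \/ (forall z, Y z -> X z) \/ (forall z, X z \/ Y z).

Section DisjointPairs.
Variable T : Type.
Variables A1 A2 : T -> Prop.
Hypothesis A_disjoint : forall z, ~ (A1 z /\ A2 z).

Lemma disjoint_pair_side (B B' : T -> Prop) :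
  (forall z, ~ (B z /\ B' z)) -> (exists z, B z) -> (exists z, B' z) ->
  meets A1 B -> meets A1 B' -> meets A2 B -> meets A2 B' ->
  nested_or_covering A1 B -> nested_or_covering A2 B ->
  ((forall z, B z -> A1 z) /\ (forall z, A2 z \/ B z)) \/
  ((forall z, B z -> A2 z) /\ (forall z, A1 z \/ B z)).
Proof.
  intros DB [b Hb] [b' Hb'] _ [z1 [Z1 Z1']] _ [z2 [Z2 Z2']] T1 T2.
  destruct T1 as [X1|[X1|X1]]; [exfalso; apply (DB z1); auto| |];
  destruct T2 as [X2|[X2|X2]]; try (exfalso; apply (DB z2); auto; fail); auto.
  - exfalso. apply (A_disjoint b). auto.
  - exfalso. apply (DB b'). split; [|exact Hb'].
    destruct (X1 b'); destruct (X2 b'); auto; exfalso; apply (A_disjoint b'); auto.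
Qed.

(* If all four pairs met, each [Bj] would lie in one [Ai] while the other covers its
   complement; either way [A1] and [A2] would meet. *)
Lemma exists_disjoint_pair (B1 B2 : T -> Prop) :
  (forall z, ~ (B1 z /\ B2 z)) -> (exists z, B1 z) -> (exists z, B2 z) -> (exists z, ~ B1 z /\ ~ B2 z) ->
  (meets A1 B1 -> nested_or_covering A1 B1) -> (meets A1 B2 -> nested_or_covering A1 B2) ->
  (meets A2 B1 -> nested_or_covering A2 B1) -> (meets A2 B2 -> nested_or_covering A2 B2) ->
  ~ meets A1 B1 \/ ~ meets A1 B2 \/ ~ meets A2 B1 \/ ~ meets A2 B2.
Proof.
  intros DB [b1 Hb1] [b2 Hb2] [z0 [Z1 Z2]] T11 T12 T21 T22.
  apply NNPP. intros N.
  assert (M11 : meets A1 B1) by (apply NNPP; tauto).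
  assert (M12 : meets A1 B2) by (apply NNPP; tauto).
  assert (M21 : meets A2 B1) by (apply NNPP; tauto).
  assert (M22 : meets A2 B2) by (apply NNPP; tauto).
  assert (DB' : forall z, ~ (B2 z /\ B1 z)) by firstorder.
  destruct (disjoint_pair_side B1 B2 DB (ex_intro _ b1 Hb1) (ex_intro _ b2 Hb2)
              M11 M12 M21 M22 (T11 M11) (T21 M21)) as [[P1 Q1]|[P1 Q1]];
  destruct (disjoint_pair_side B2 B1 DB' (ex_intro _ b2 Hb2) (ex_intro _ b1 Hb1)
              M12 M11 M22 M21 (T12 M12) (T22 M22)) as [[P2 Q2]|[P2 Q2]].
  - apply (A_disjoint b2). split; [auto|]. destruct (Q1 b2); [auto|]. exfalso; apply (DB b2); auto.
  - apply (A_disjoint z0). destruct (Q1 z0); destruct (Q2 z0); tauto.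
  - apply (A_disjoint z0). destruct (Q1 z0); destruct (Q2 z0); tauto.
  - apply (A_disjoint b2). split; [|auto]. destruct (Q1 b2); [auto|]. exfalso; apply (DB b2); auto.
Qed.

End DisjointPairs.

Lemma commute_of_disjoint_supports {T : Type} (f k : T -> T) (P Q : T -> Prop) :
  (forall z, ~ P z -> f z = z) -> (forall z, ~ Q z -> k z = z) -> (forall z, ~ (P z /\ Q z)) ->
  (forall u v, f u = f v -> u = v) -> (forall u v, k u = k v -> u = v) -> commute T f k.
Proof.
  intros Hf Hk D If Ik z.
  assert (Pf : forall z, P z -> P (f z)).
  { intros w Hw. apply NNPP. intros X. pose proof (Hf _ X) as E. apply If in E. congruence. }
  assert (Qk : forall z, Q z -> Q (k z)).
  { intros w Hw. apply NNPP. intros X. pose proof (Hk _ X) as E. apply Ik in E. congruence. }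
  destruct (classic (P z)) as [Pz|Pz].
  - assert (Kz : k z = z) by (apply Hk; intros X; exact (D z (conj Pz X))).
    assert (Kfz : k (f z) = f z) by (apply Hk; intros X; exact (D _ (conj (Pf z Pz) X))).
    rewrite Kz, Kfz. reflexivity.
  - rewrite (Hf z Pz). destruct (classic (Q z)) as [Qz|Qz].
    + apply Hf. intros X. exact (D _ (conj X (Qk z Qz))).
    + rewrite (Hk z Qz). apply Hf, Pz.
Qed.

(** * Paths and half-trees *)

Section Tree.
Variable V : Type.
Variable adj : V -> V -> Prop.
Hypothesis adj_sym : forall u v, adj u v -> adj v u.
Hypothesis adj_irrefl : forall v, ~ adj v v.
Hypothesis connected : forall u v, walk_in V adj (fun _ => True) u v.
Hypothesis no_circuit : forall (n : nat) (p : nat -> V), 1 <= n -> p 0 = p n ->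
  (forall i, i < n -> adj (p i) (p (S i))) -> exists i, i + 2 <= n /\ p i = p (i + 2).

Definition walk (n : nat) (p : nat -> V) : Prop := forall i, i < n -> adj (p i) (p (S i)).
Definition nonbacktracking (n : nat) (p : nat -> V) : Prop := forall i, i + 2 <= n -> p i <> p (i + 2).
Definition reduced_path (n : nat) (p : nat -> V) (a b : V) : Prop :=
  p 0 = a /\ p n = b /\ walk n p /\ nonbacktracking n p.

Definition rev_path (n : nat) (p : nat -> V) : nat -> V := fun i => p (n - i).
Definition concat_path (n : nat) (p q : nat -> V) : nat -> V :=
  fun i => if i <=? n then p i else q (i - n).
Definition cons_path (x : V) (p : nat -> V) : nat -> V :=
  fun i => match i with 0 => x | S j => p j end.

Lemma reduced_loop_trivial n p a : reduced_path n p a a -> n = 0.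
Proof.
  intros [H0 [H1 [HW HN]]]. destruct n as [|n]; [reflexivity|]. exfalso.
  destruct (no_circuit (S n) p) as [i [Hi E]]; [lia|congruence|exact HW|].
  exact (HN i Hi E).
Qed.

Lemma reduced_path_refl a : reduced_path 0 (fun _ => a) a a.
Proof. repeat split; intros i Hi; lia. Qed.

Lemma reduced_path_edge a c : adj a c -> reduced_path 1 (cons_path a (fun _ => c)) a c.
Proof.
  intros H. repeat split; [|intros i Hi; lia].
  intros i Hi. replace i with 0 by lia. exact H.
Qed.

Lemma reduced_path_rev n p a b : reduced_path n p a b -> reduced_path n (rev_path n p) b a.
Proof.
  intros [H0 [H1 [HW HN]]]. unfold rev_path; repeat split.
  - rewrite Nat.sub_0_r; auto.
  - rewrite Nat.sub_diag; auto.
  - intros i Hi. apply adj_sym. replace (n - i) with (S (n - S i)) by lia. apply HW; lia.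
  - intros i Hi. replace (n - i) with ((n - (i + 2)) + 2) by lia.
    intro X; symmetry in X; revert X; apply HN; lia.
Qed.

Lemma reduced_path_sub n p a b i j : reduced_path n p a b -> i <= j -> j <= n ->
  reduced_path (j - i) (fun t => p (i + t)) (p i) (p j).
Proof.
  intros [H0 [H1 [HW HN]]] Hij Hjn. repeat split.
  - f_equal; lia.
  - f_equal; lia.
  - intros t Ht. replace (i + S t) with (S (i + t)) by lia. apply HW; lia.
  - intros t Ht. replace (i + (t + 2)) with ((i + t) + 2) by lia. apply HN; lia.
Qed.

Lemma reduced_path_prefix n p a b k : reduced_path n p a b -> k <= n -> reduced_path k p a (p k).
Proof.
  intros H Hk. pose proof (reduced_path_sub n p a b 0 k H (Nat.le_0_l _) Hk) as X.
  destruct H as [H0 _]. rewrite Nat.sub_0_r in X. simpl in X. rewrite H0 in X. exact X.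
Qed.

Lemma reduced_path_shift n p a b : reduced_path (S n) p a b -> reduced_path n (fun i => p (S i)) (p 1) b.
Proof.
  intros H. pose proof (reduced_path_sub _ _ _ _ 1 (S n) H ltac:(lia) (le_n _)) as X.
  simpl in X. destruct H as [_ [H1 _]]. rewrite Nat.sub_0_r, H1 in X. exact X.
Qed.

Lemma reduced_path_concat n p m q a b c : reduced_path n p a b -> reduced_path m q b c ->
  (1 <= n -> 1 <= m -> p (n - 1) <> q 1) -> reduced_path (n + m) (concat_path n p q) a c.
Proof.
  intros [H0 [H1 [HW HN]]] [K0 [K1 [KW KN]]] J. unfold concat_path; repeat split.
  - destruct (Nat.leb_spec 0 n); [exact H0|lia].
  - destruct (Nat.leb_spec (n + m) n).
    + replace m with 0 in * by lia. rewrite Nat.add_0_r. congruence.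
    + replace (n + m - n) with m by lia. exact K1.
  - intros i Hi. destruct (Nat.leb_spec i n); destruct (Nat.leb_spec (S i) n); try lia.
    + apply HW; lia.
    + replace i with n by lia. rewrite H1, <- K0. replace (S n - n) with 1 by lia. apply KW; lia.
    + replace (S i - n) with (S (i - n)) by lia. apply KW; lia.
  - intros i Hi. destruct (Nat.leb_spec i n); destruct (Nat.leb_spec (i + 2) n); try lia.
    + apply HN; lia.
    + destruct (Nat.eq_dec i n) as [->|Hin].
      * replace (n + 2 - n) with 2 by lia. rewrite H1, <- K0. apply KN; lia.
      * replace i with (n - 1) by lia. replace (n - 1 + 2 - n) with 1 by lia. apply J; lia.
    + replace (i + 2 - n) with ((i - n) + 2) by lia. apply KN; lia.
Qed.

Lemma reduced_path_cons n p a b x : reduced_path n p a b -> adj x a -> (1 <= n -> x <> p 1) ->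
  reduced_path (S n) (cons_path x p) x b.
Proof.
  intros [H0 [H1 [HW HN]]] Ha Hx. unfold cons_path; repeat split; auto.
  - intros [|i] Hi; [congruence|]. apply HW; lia.
  - intros [|i] Hi; simpl; [apply Hx; lia|].
    replace (S (S i)) with (i + 2) by lia. apply HN; lia.
Qed.

Lemma reduced_path_map f n p a b : is_aut V adj f -> reduced_path n p a b ->
  reduced_path n (fun i => f (p i)) (f a) (f b).
Proof.
  intros [HA [HI _]] [H0 [H1 [HW HN]]]. repeat split.
  - congruence.
  - congruence.
  - intros i Hi. apply (proj1 (HA _ _)). apply HW; auto.
  - intros i Hi E. apply HI in E. revert E. apply HN; auto.
Qed.

Lemma reduced_path_unique n p m q a b : reduced_path n p a b -> reduced_path m q a b ->
  n = m /\ forall i, i <= n -> p i = q i.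
Proof.
  revert p m q a. induction n as [|n IH]; intros p m q a Hp Hq.
  - pose proof Hp as [Hp0 [Hpn _]]. assert (b = a) as -> by congruence.
    assert (m = 0) as -> by exact (reduced_loop_trivial m q a Hq).
    split; [reflexivity|]. intros i Hi. replace i with 0 by lia. destruct Hq as [Hq0 _]. congruence.
  - destruct m as [|m].
    + exfalso. pose proof Hq as [Hq0 [Hqn _]].
      assert (S n = 0); [|lia]. apply (reduced_loop_trivial _ p a). congruence.
    + destruct (classic (p 1 = q 1)) as [E|E].
      * pose proof (reduced_path_shift _ _ _ _ Hq) as Hq'. rewrite <- E in Hq'.
        destruct (IH _ m _ _ (reduced_path_shift _ _ _ _ Hp) Hq') as [Hnm Hpq].
        split; [lia|]. intros [|i] Hi; [destruct Hp, Hq; congruence|]. apply (Hpq i); lia.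
      * exfalso.
        assert (Hl := reduced_path_concat _ _ _ _ _ _ _ (reduced_path_rev _ _ _ _ Hp) Hq).
        assert (S n + S m = 0); [|lia].
        apply (reduced_loop_trivial _ (concat_path (S n) (rev_path (S n) p) q) b), Hl. intros _ _. unfold rev_path.
        replace (S n - (S n - 1)) with 1 by lia. exact E.
Qed.

Lemma reduced_path_inj n p a b i j : reduced_path n p a b -> i <= j -> j <= n -> p i = p j -> i = j.
Proof.
  intros H Hij Hjn E. pose proof (reduced_path_sub n p a b i j H Hij Hjn) as X.
  rewrite E in X. apply reduced_loop_trivial in X. lia.
Qed.

Lemma reduced_path_of_walk n p : walk n p -> exists m q, reduced_path m q (p 0) (p n).
Proof.
  revert p. induction n as [|n IH]; intros p HW.
  - exists 0, p. repeat split; intros i Hi; lia.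
  - destruct (IH (fun i => p (S i))) as [m [q Hq]]; [intros i Hi; apply HW; lia|].
    destruct (classic (1 <= m /\ q 1 = p 0)) as [[Hm E]|E].
    + destruct m as [|m]; [lia|]. exists m, (fun i => q (S i)).
      rewrite <- E. exact (reduced_path_shift _ _ _ _ Hq).
    + exists (S m), (cons_path (p 0) q). apply (reduced_path_cons m q (p 1)); auto.
      apply HW. lia.
Qed.

Lemma exists_reduced_path a b : exists np : nat * (nat -> V), reduced_path (fst np) (snd np) a b.
Proof.
  destruct (connected a b) as [n [p [H0 [H1 [HW _]]]]].
  destruct (reduced_path_of_walk n p HW) as [m [q Hq]]. exists (m, q). simpl. congruence.
Qed.

Definition geodesic (a b : V) : nat * (nat -> V) :=
  proj1_sig (constructive_indefinite_description _ (exists_reduced_path a b)).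
Definition dist (a b : V) : nat := fst (geodesic a b).
Definition geod (a b : V) : nat -> V := snd (geodesic a b).

Lemma geod_reduced a b : reduced_path (dist a b) (geod a b) a b.
Proof.
  unfold dist, geod, geodesic. destruct (constructive_indefinite_description _ _) as [np Hnp]. exact Hnp.
Qed.

Lemma geod_unique n p a b : reduced_path n p a b -> n = dist a b /\ forall i, i <= n -> p i = geod a b i.
Proof. intros H. exact (reduced_path_unique _ _ _ _ _ _ H (geod_reduced a b)). Qed.

Lemma geod_sym a b : dist b a = dist a b /\
  forall i, i <= dist a b -> geod b a i = geod a b (dist a b - i).
Proof.
  destruct (geod_unique _ _ _ _ (reduced_path_rev _ _ _ _ (geod_reduced a b))) as [E1 E2].
  split; [auto|]. intros i Hi. rewrite <- E2 by exact Hi. reflexivity.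
Qed.

(* [halftree a c] is the component of the tree minus the edge [ac] that contains [c]. *)
Definition halftree (a c z : V) : Prop := 1 <= dist a z /\ geod a z 1 = c.

Lemma halftree_iff n p a c z : reduced_path n p a z -> (halftree a c z <-> 1 <= n /\ p 1 = c).
Proof.
  intros H. destruct (geod_unique _ _ _ _ H) as [E1 E2]. unfold halftree.
  split; intros [X Y]; split; try lia.
  - rewrite E2; auto; lia.
  - rewrite <- E2; auto; lia.
Qed.

Lemma halftree_irrefl a c : ~ halftree a c a.
Proof. intros H. apply (halftree_iff 0 (fun _ => a) a c a (reduced_path_refl a)) in H. lia. Qed.

Lemma halftree_nbr a c : adj a c -> halftree a c c.
Proof. intros H. apply (halftree_iff 1 _ a c c (reduced_path_edge a c H)). auto. Qed.

Lemma halftree_compl a c z : adj a c -> (halftree a c z <-> ~ halftree c a z).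
Proof.
  intros Hac. pose proof (geod_reduced a z) as Hg. revert Hg. generalize (dist a z) (geod a z).
  intros n p Hg. pose proof Hg as [H0 [H1 [HW HN]]].
  destruct (Nat.eq_dec n 0) as [En|En].
  - subst n. rewrite H0 in H1. subst z. split; intros X.
    + exfalso; exact (halftree_irrefl a c X).
    + exfalso; apply X, halftree_nbr, adj_sym, Hac.
  - destruct (classic (p 1 = c)) as [Ep|Ep].
    + destruct n as [|n]; [lia|].
      pose proof (reduced_path_shift _ _ _ _ Hg) as Hs. rewrite Ep in Hs.
      split; intros _.
      * intros X. apply (halftree_iff _ _ c a z Hs) in X. destruct X as [Xn X].
        apply (HN 0); [lia|]. simpl. congruence.
      * apply (halftree_iff _ _ a c z Hg). split; [lia|exact Ep].
    + assert (Hs : reduced_path (S n) (cons_path c p) c z) by (apply reduced_path_cons with a; auto; intros _ E; apply Ep; auto).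
      split; intros X.
      * apply (halftree_iff _ _ a c z Hg) in X. destruct X; contradiction.
      * exfalso. apply X. apply (halftree_iff _ _ c a z Hs). split; [lia|exact H0].
Qed.

Lemma halftree_aut f a c z : is_aut V adj f -> (halftree a c z <-> halftree (f a) (f c) (f z)).
Proof.
  intros Hf. pose proof (geod_reduced a z) as Hg.
  rewrite (halftree_iff _ _ a c z Hg), (halftree_iff _ _ _ _ _ (reduced_path_map f _ _ _ _ Hf Hg)).
  destruct Hf as [_ [HI _]]. split; intros [X Y]; split; auto. congruence.
Qed.

Lemma halftree_crossing a c u w : adj a c -> adj u w -> ~ halftree a c u -> halftree a c w ->
  u = a /\ w = c.
Proof.
  intros Hac Huw Hu Hw. pose proof (geod_reduced a u) as Hg. revert Hg. generalize (dist a u) (geod a u).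
  intros n p Hg. pose proof Hg as [H0 [H1 [HW HN]]].
  destruct (Nat.eq_dec n 0) as [En|En].
  - subst n. rewrite H0 in H1. subst u. split; [reflexivity|].
    apply (halftree_iff _ _ a c w (reduced_path_edge a w Huw)) in Hw. apply Hw.
  - assert (Hp1 : p 1 <> c).
    { intros E. apply Hu. apply (halftree_iff _ _ a c u Hg). split; [lia|exact E]. }
    exfalso. destruct (classic (p (n - 1) = w)) as [Ew|Ew].
    + pose proof (reduced_path_prefix _ _ _ _ (n - 1) Hg ltac:(lia)) as Hpre. rewrite Ew in Hpre.
      apply (halftree_iff _ _ a c w Hpre) in Hw. apply Hp1, Hw.
    + assert (Hgl := reduced_path_concat _ _ _ _ _ _ _ Hg (reduced_path_edge u w Huw)
                       (fun _ _ => Ew)).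
      apply (halftree_iff _ _ a c w Hgl) in Hw. destruct Hw as [_ Hw2].
      unfold concat_path in Hw2. destruct (Nat.leb_spec 1 n); [|lia]. exact (Hp1 Hw2).
Qed.

Lemma halftree_exit a c n p : adj a c -> walk n p -> halftree a c (p 0) -> ~ halftree a c (p n) ->
  exists j, j < n /\ p j = c /\ p (S j) = a.
Proof.
  intros Hac HW H0 Hn.
  destruct (exists_nat_crossing (fun i => halftree a c (p i)) n H0 Hn) as [j [Hj [J1 J2]]].
  destruct (halftree_crossing a c (p (S j)) (p j)) as [E1 E2]; auto.
  exists j. auto.
Qed.

Lemma halftree_convex a c u w n p : adj a c -> halftree a c u -> halftree a c w ->
  reduced_path n p u w -> forall i, i <= n -> halftree a c (p i).
Proof.
  intros Hac Hu Hw Hp i Hi. pose proof Hp as [H0 [H1 [HW HN]]].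
  apply NNPP. intros Hpi.
  destruct (halftree_exit a c i p Hac) as [j [Hj [Ej ESj]]]; auto.
  - intros k Hk. apply HW. lia.
  - rewrite H0; exact Hu.
  - set (q := fun t => p (n - t)).
    destruct (halftree_exit a c (n - i) q Hac) as [j' [Hj' [Ej' ESj']]].
    + intros k Hk. unfold q. apply adj_sym. replace (n - k) with (S (n - S k)) by lia. apply HW; lia.
    + unfold q. rewrite Nat.sub_0_r, H1. exact Hw.
    + unfold q. replace (n - (n - i)) with i by lia. exact Hpi.
    + unfold q in Ej', ESj'.
      assert (S j = n - S j') by (apply (reduced_path_inj n p u w); try lia; congruence).
      apply (HN j); [lia|]. replace (j + 2) with (n - j') by lia. congruence.
Qed.

Lemma halftree_edge_side a c a' c' : adj a c -> adj a' c' ->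
  (a' = a /\ c' = c) \/ (a' = c /\ c' = a) \/ (halftree a c a' <-> halftree a c c').
Proof.
  intros Hac Hac'.
  destruct (classic (halftree a c a')) as [Ha|Ha]; destruct (classic (halftree a c c')) as [Hc|Hc];
    try tauto.
  - destruct (halftree_crossing a c c' a') as [E1 E2]; auto.
  - destruct (halftree_crossing a c a' c') as [E1 E2]; auto.
Qed.

Lemma halftree_meet_tip a c a' c' z : adj a c -> adj a' c' ->
  halftree a c z -> halftree a' c' z -> halftree a c c' \/ halftree a' c' c.
Proof.
  intros Hac Hac' Hz Hz'. apply NNPP. intros N.
  pose proof (geod_reduced z c) as Hg. pose proof Hg as [G0 [G1 [GW _]]].
  destruct (halftree_exit a' c' (dist z c) (geod z c) Hac' GW) as [j [Hj [Ej _]]].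
  - rewrite G0. exact Hz'.
  - rewrite G1. tauto.
  - apply N. left. rewrite <- Ej.
    apply (halftree_convex a c z c _ _ Hac Hz (halftree_nbr a c Hac) Hg). lia.
Qed.

Lemma halftree_subset a c a' c' : adj a c -> adj a' c' ->
  halftree a c c' -> ~ halftree a' c' c -> forall z, halftree a' c' z -> halftree a c z.
Proof.
  intros Hac Hac' Hc' Hc z Hz. apply NNPP. intros Nz.
  pose proof (geod_reduced c' z) as Hg. pose proof Hg as [G0 [G1 [GW _]]].
  destruct (halftree_exit a c (dist c' z) (geod c' z) Hac GW) as [j [Hj [Ej _]]].
  - rewrite G0. exact Hc'.
  - rewrite G1. exact Nz.
  - apply Hc. rewrite <- Ej.
    apply (halftree_convex a' c' c' z _ _ Hac' (halftree_nbr a' c' Hac') Hz Hg). lia.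
Qed.

Lemma halftree_trichotomy a c a' c' : adj a c -> adj a' c' ->
  (exists z, halftree a c z /\ halftree a' c' z) ->
  (forall z, halftree a c z -> halftree a' c' z) \/ (forall z, halftree a' c' z -> halftree a c z) \/
  (forall z, halftree a c z \/ halftree a' c' z).
Proof.
  intros Hac Hac' [z0 [Z1 Z2]].
  destruct (halftree_edge_side a c a' c' Hac Hac') as [[-> ->]|[[-> ->]|EX]]; [left; auto| |].
  { exfalso. apply (proj1 (halftree_compl a c z0 Hac) Z1 Z2). }
  destruct (halftree_edge_side a' c' a c Hac' Hac) as [[-> ->]|[[-> ->]|EY]]; [left; auto| |].
  { exfalso. apply (proj1 (halftree_compl a' c' z0 Hac') Z2 Z1). }
  destruct (classic (halftree a c c')) as [Xc'|Xc'];
    destruct (classic (halftree a' c' c)) as [Yc|Yc].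
  - right; right. intros z. apply NNPP. intros Nz.
    assert (Cz : halftree c a z) by (apply (halftree_compl c a z (adj_sym _ _ Hac)); tauto).
    assert (C'z : halftree c' a' z) by (apply (halftree_compl c' a' z (adj_sym _ _ Hac')); tauto).
    destruct (halftree_meet_tip c a c' a' z (adj_sym _ _ Hac) (adj_sym _ _ Hac') Cz C'z) as [X|X].
    + apply (proj1 (halftree_compl a c a' Hac)); tauto.
    + apply (proj1 (halftree_compl a' c' a Hac')); tauto.
  - right; left. exact (halftree_subset a c a' c' Hac Hac' Xc' Yc).
  - left. exact (halftree_subset a' c' a c Hac' Hac Yc Xc').
  - exfalso. destruct (halftree_meet_tip a c a' c' z0 Hac Hac' Z1 Z2); tauto.
Qed.

Lemma halftree_subset_inner a c a' c' : adj a c -> adj a' c' ->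
  halftree a c a' -> halftree a c c' -> ~ halftree a' c' a ->
  forall z, halftree a' c' z -> halftree a c z.
Proof.
  intros Hac Hac' Ha' Hc' Na. apply (halftree_subset a c a' c' Hac Hac' Hc'). intros Hc.
  destruct (halftree_crossing a' c' a c Hac' Hac Na Hc) as [<- _].
  exact (halftree_irrefl a c Ha').
Qed.

Lemma geod_first_step_outside y c q z : adj y c -> halftree y c q -> ~ halftree y c z ->
  halftree q (geod q y 1) z.
Proof.
  intros Hyc [Hq1 Hq2] Hz. set (d := dist y q) in *.
  destruct (geod_sym y q) as [Ed Eg].
  assert (R := reduced_path_rev _ _ _ _ (geod_reduced y q)). fold d in R.
  assert (Hj : 1 <= d -> 1 <= dist y z -> rev_path d (geod y q) (d - 1) <> geod y z 1).
  { intros _ Hz1 E. apply Hz. split; [exact Hz1|]. rewrite <- E, <- Hq2. unfold rev_path. f_equal. lia. }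
  apply (halftree_iff _ _ _ _ _ (reduced_path_concat _ _ _ _ _ _ _ R (geod_reduced y z) Hj)).
  split; [lia|]. unfold concat_path. destruct (Nat.leb_spec 1 d); [|lia].
  rewrite Eg by lia. reflexivity.
Qed.

(** * Lines *)

Lemma line_segment l m d : is_line V adj l ->
  reduced_path d (fun i => l (m + Z.of_nat i)%Z) (l m) (l (m + Z.of_nat d)%Z).
Proof.
  intros [HA HI]. repeat split.
  - f_equal; lia.
  - intros i Hi. replace (m + Z.of_nat (S i))%Z with ((m + Z.of_nat i) + 1)%Z by lia. apply HA.
  - intros i Hi E. apply HI in E. lia.
Qed.

Lemma line_segment_to l m n : is_line V adj l -> (m <= n)%Z ->
  reduced_path (Z.to_nat (n - m)) (fun i => l (m + Z.of_nat i)%Z) (l m) (l n).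
Proof.
  intros Hl Hmn. pose proof (line_segment l m (Z.to_nat (n - m)) Hl) as H.
  replace (m + Z.of_nat (Z.to_nat (n - m)))%Z with n in H by lia. exact H.
Qed.

Lemma line_halftree l m n : is_line V adj l -> (m < n)%Z -> halftree (l m) (l (m + 1)%Z) (l n).
Proof.
  intros Hl Hmn. apply (halftree_iff _ _ _ _ _ (line_segment_to l m n Hl ltac:(lia))).
  split; [lia|]. f_equal; lia.
Qed.

Lemma line_adj_index l i j : is_line V adj l -> adj (l i) (l j) -> j = (i + 1)%Z \/ j = (i - 1)%Z.
Proof.
  intros Hl Hadj. destruct (Z.lt_total i j) as [Hij|[->|Hij]].
  - destruct (reduced_path_unique _ _ _ _ _ _ (line_segment_to l i j Hl ltac:(lia))
                (reduced_path_edge _ _ Hadj)) as [E _]. lia.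
  - exfalso. exact (adj_irrefl _ Hadj).
  - destruct (reduced_path_unique _ _ _ _ _ _ (line_segment_to l j i Hl ltac:(lia))
                (reduced_path_edge _ _ (adj_sym _ _ Hadj))) as [E _]. lia.
Qed.

Lemma line_crosses_edge a c l m n : adj a c -> is_line V adj l ->
  halftree a c (l m) -> ~ halftree a c (l n) ->
  exists j, (l j = a /\ l (j + 1)%Z = c) \/ (l (j + 1)%Z = a /\ l j = c).
Proof.
  intros Hac [HA HI] Hm Hn.
  destruct (exists_Z_crossing (fun s => halftree a c (l s)) m n Hm Hn) as [j [[J1 J2]|[J1 J2]]];
    exists j.
  - right. apply (halftree_crossing a c); auto.
  - left. apply (halftree_crossing a c); auto.
Qed.

Definition closest (l : Z -> V) (z : V) (P : Z) : Prop := forall n, dist (l P) z <= dist (l n) z.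

Lemma exists_closest l z : exists P, closest l z P.
Proof. exact (exists_argmin (fun n => dist (l n) z) 0%Z). Qed.

Lemma closest_geod_off_line l z P : closest l z P -> l P <> z ->
  1 <= dist (l P) z /\ forall n, geod (l P) z 1 <> l n.
Proof.
  intros HP Hz. pose proof (geod_reduced (l P) z) as Hg. pose proof Hg as [H0 [H1 _]].
  destruct (dist (l P) z) as [|k] eqn:Ek.
  - exfalso. apply Hz. congruence.
  - split; [lia|]. intros n E.
    pose proof (reduced_path_shift _ _ _ _ Hg) as Hs. rewrite E in Hs.
    destruct (geod_unique _ _ _ _ Hs) as [X _]. specialize (HP n). lia.
Qed.

Lemma closest_halftree l z P M : is_line V adj l -> closest l z P -> (M < P)%Z ->
  halftree (l M) (l (M + 1)%Z) z.
Proof.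
  intros Hl HP HM. destruct (classic (l P = z)) as [<-|Ez]; [apply line_halftree; auto|].
  destruct (closest_geod_off_line l z P HP Ez) as [Hn Hs].
  assert (Hgl := reduced_path_concat _ _ _ _ _ _ _ (line_segment_to l M P Hl ltac:(lia))
                   (geod_reduced (l P) z) (fun _ _ => not_eq_sym (Hs _))).
  apply (halftree_iff _ _ _ _ _ Hgl). split; [lia|]. unfold concat_path.
  destruct (Nat.leb_spec 1 (Z.to_nat (P - M))); [|lia]. f_equal; lia.
Qed.

Lemma line_halftree_mono l J M z : is_line V adj l -> (J <= M)%Z ->
  halftree (l M) (l (M + 1)%Z) z -> halftree (l J) (l (J + 1)%Z) z.
Proof.
  intros Hl HJM Hz. destruct (Z.eq_dec J M) as [->|E]; [exact Hz|].
  pose proof Hz as [Hz1 Hz2].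
  assert (Hgl := reduced_path_concat _ _ _ _ _ _ _ (line_segment_to l J M Hl HJM) (geod_reduced (l M) z)).
  assert (Hj : 1 <= Z.to_nat (M - J) -> 1 <= dist (l M) z ->
              l (J + Z.of_nat (Z.to_nat (M - J) - 1))%Z <> geod (l M) z 1).
  { intros _ _ X. rewrite Hz2 in X. apply (proj2 Hl) in X. lia. }
  apply (halftree_iff _ _ _ _ _ (Hgl Hj)). split; [lia|]. unfold concat_path.
  destruct (Nat.leb_spec 1 (Z.to_nat (M - J))); [|lia]. f_equal; lia.
Qed.

Lemma closest_halftree_inside a c l P m : adj a c -> is_line V adj l -> (forall n, halftree a c (l n)) ->
  closest l a P -> adj (l P) (l m) -> forall z, halftree (l P) (l m) z -> halftree a c z.
Proof.
  intros Hac Hl Hin HP Hm.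
  assert (HPa : l P <> a) by (intros E; apply (halftree_irrefl a c); rewrite <- E at 2; apply Hin).
  destruct (closest_geod_off_line l a P HP HPa) as [Hd Hoff].
  apply (halftree_subset_inner a c (l P) (l m) Hac Hm (Hin P) (Hin m)).
  intros X. apply (halftree_iff _ _ _ _ _ (geod_reduced (l P) a)) in X. exact (Hoff m (proj2 X)).
Qed.

Definition hanging_edge (l : Z -> V) (m : Z) (p : V) : Prop := adj (l m) p /\ forall n, p <> l n.

Lemma hanging_halftree_misses_line l m p : is_line V adj l -> hanging_edge l m p ->
  forall n, ~ halftree (l m) p (l n).
Proof.
  intros Hl [Hp Hoff] n X. destruct (Z.lt_total m n) as [E|[<-|E]].
  - apply (halftree_iff _ _ _ _ _ (line_segment_to l m n Hl ltac:(lia))) in X.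
    apply (Hoff (m + Z.of_nat 1)%Z). symmetry. apply X.
  - exact (halftree_irrefl _ _ X).
  - pose proof (reduced_path_rev _ _ _ _ (line_segment_to l n m Hl ltac:(lia))) as R.
    apply (halftree_iff _ _ _ _ _ R) in X. destruct X as [_ X]. unfold rev_path in X.
    apply (Hoff (n + Z.of_nat (Z.to_nat (m - n) - 1))%Z). symmetry. exact X.
Qed.

Lemma hanging_halftrees_disjoint l m p m' p' : is_line V adj l ->
  hanging_edge l m p -> hanging_edge l m' p' -> m <> m' ->
  forall w, ~ (halftree (l m) p w /\ halftree (l m') p' w).
Proof.
  intros Hl Hp Hp' Hmm' w [X Y].
  destruct (halftree_meet_tip _ _ _ _ w (proj1 Hp) (proj1 Hp') X Y) as [Z|Z].
  - destruct (halftree_crossing (l m) p (l m') p' (proj1 Hp) (proj1 Hp')) as [E _]; auto.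
    + apply (hanging_halftree_misses_line l m p Hl Hp).
    + apply (proj2 Hl) in E. congruence.
  - destruct (halftree_crossing (l m') p' (l m) p (proj1 Hp') (proj1 Hp)) as [E _]; auto.
    + apply (hanging_halftree_misses_line l m' p' Hl Hp').
    + apply (proj2 Hl) in E. congruence.
Qed.

Lemma ray_equiv_trans r r' r'' : ray_equiv V r r' -> ray_equiv V r' r'' -> ray_equiv V r r''.
Proof.
  intros [a [b H]] [c [d K]]. destruct (Nat.le_ge_cases b c).
  - exists (a + (c - b)), d. intros n. rewrite <- K. replace (c + n) with (b + ((c - b) + n)) by lia.
    rewrite <- H. f_equal. lia.
  - exists a, (d + (b - c)). intros n. rewrite H. replace (b + n) with (c + ((b - c) + n)) by lia.
    rewrite K. f_equal. lia.
Qed.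

Lemma ray_within_line (r : nat -> V) l : is_line V adj l ->
  (forall t, adj (r t) (r (S t))) -> (forall t, r t <> r (t + 2)) -> (forall t, exists s, l s = r t) ->
  ray_equiv V r (line_plus V l) \/ ray_equiv V r (line_minus V l).
Proof.
  intros Hl Hadj Hnb Hon.
  destruct (choice (fun t s => l s = r t) Hon) as [sg Hsg].
  assert (Hstep : forall t, sg (S t) = (sg t + 1)%Z \/ sg (S t) = (sg t - 1)%Z).
  { intros t. apply (line_adj_index l); auto. rewrite !Hsg. apply Hadj. }
  assert (Hne : forall t, sg (t + 2) <> sg t).
  { intros t E. apply (Hnb t). rewrite <- !Hsg. congruence. }
  set (e := (sg 1%nat - sg O)%Z).
  assert (Hlin : forall t, sg t = (sg O + e * Z.of_nat t)%Z).
  { assert (forall t, sg (S t) = (sg t + e)%Z /\ sg t = (sg O + e * Z.of_nat t)%Z) as H.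
    { induction t as [|t [IH1 IH2]]; [unfold e; split; lia|].
      split; [|lia]. specialize (Hne t). replace (t + 2) with (S (S t)) in Hne by lia.
      destruct (Hstep O), (Hstep (S t)); unfold e in *; lia. }
    intros t. apply H. }
  assert (He : e = 1%Z \/ e = (-1)%Z) by (unfold e; destruct (Hstep O); lia).
  set (A := Z.to_nat (Z.abs (sg O))).
  destruct He as [He|He]; [left|right].
  - exists A, (Z.to_nat (sg O + Z.of_nat A)). intros n. unfold line_plus.
    rewrite <- Hsg, Hlin, He. f_equal. lia.
  - exists A, (Z.to_nat (Z.of_nat A - sg O)). intros n. unfold line_minus.
    rewrite <- Hsg, Hlin, He. f_equal. lia.
Qed.

Lemma line_escaping_halftrees_shares_end l l' : is_line V adj l -> is_line V adj l' ->
  (forall M, exists n, ~ halftree (l M) (l (M + 1)%Z) (l' n)) ->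
  ray_equiv V (line_minus V l) (line_plus V l') \/ ray_equiv V (line_minus V l) (line_minus V l').
Proof.
  intros Hl Hl' HM.
  destruct (exists_closest l (l' 0%Z)) as [P HP].
  set (r := fun t : nat => l (P - 1 - Z.of_nat t)%Z).
  assert (Hr : ray_equiv V (line_minus V l) r).
  { exists (S (Z.to_nat (Z.abs P))), (Z.to_nat (Z.abs P + P)). intros n. unfold r, line_minus.
    f_equal. lia. }
  assert (Hon : forall t, exists s, l' s = r t).
  { intros t. destruct (HM (P - 1 - Z.of_nat t)%Z) as [n Hn].
    assert (H0 : halftree (l (P - 1 - Z.of_nat t)%Z) (l (P - 1 - Z.of_nat t + 1)%Z) (l' 0%Z))
      by (apply (closest_halftree l _ P); auto; lia).
    destruct (line_crosses_edge _ _ l' 0%Z n (proj1 Hl _) Hl' H0 Hn) as [j [[E _]|[E _]]]; eauto. }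
  destruct (ray_within_line r l' Hl') as [X|X]; auto.
  - intros t. unfold r. apply adj_sym.
    replace (P - 1 - Z.of_nat t)%Z with ((P - 1 - Z.of_nat (S t)) + 1)%Z by lia. apply Hl.
  - intros t E. apply (proj2 Hl) in E. lia.
  - left. exact (ray_equiv_trans _ _ _ Hr X).
  - right. exact (ray_equiv_trans _ _ _ Hr X).
Qed.

(** * Rays and ends *)

Lemma walk_in_of_reduced_path (P : V -> Prop) n p a b : reduced_path n p a b ->
  (forall i, i <= n -> P (p i)) -> walk_in V adj P a b.
Proof. intros [H0 [H1 [HW _]]] HP. exists n, p. auto. Qed.

Lemma walk_in_trans (P : V -> Prop) a b c :
  walk_in V adj P a b -> walk_in V adj P b c -> walk_in V adj P a c.
Proof.
  intros [n [p [H0 [H1 [HW HP]]]]] [m [q [K0 [K1 [KW KP]]]]].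
  exists (n + m), (concat_path n p q). unfold concat_path. repeat split.
  - destruct (Nat.leb_spec 0 n); [exact H0|lia].
  - destruct (Nat.leb_spec (n + m) n).
    + replace m with 0 in * by lia. rewrite Nat.add_0_r. congruence.
    + replace (n + m - n) with m by lia. exact K1.
  - intros i Hi. destruct (Nat.leb_spec i n); destruct (Nat.leb_spec (S i) n); try lia.
    + apply HW; lia.
    + replace i with n by lia. rewrite H1, <- K0. replace (S n - n) with 1 by lia. apply KW; lia.
    + replace (S i - n) with (S (i - n)) by lia. apply KW; lia.
  - intros i Hi. destruct (Nat.leb_spec i n); [apply HP|apply KP]; lia.
Qed.

Definition reduced_ray (r : nat -> V) : Prop :=
  (forall n, adj (r n) (r (S n))) /\ (forall n, r n <> r (n + 2)).

Lemma reduced_ray_prefix r n : reduced_ray r -> reduced_path n r (r 0) (r n).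
Proof. intros [HA HN]. repeat split; intros i _; auto. Qed.

Lemma reduced_ray_is_ray r : reduced_ray r -> is_ray V adj r.
Proof.
  intros Hr. split; [apply Hr|]. intros m n E.
  destruct (Nat.le_ge_cases m n);
    [|symmetry]; eapply (reduced_path_inj (max m n) r); eauto using reduced_ray_prefix; lia.
Qed.

Lemma reduced_ray_halftree r i k : reduced_ray r -> i < k -> halftree (r i) (r (S i)) (r k).
Proof.
  intros Hr Hik.
  pose proof (reduced_path_sub _ _ _ _ i k (reduced_ray_prefix r k Hr) ltac:(lia) (le_n _)) as H.
  apply (halftree_iff _ _ _ _ _ H). split; [lia|]. f_equal; lia.
Qed.

Lemma line_ray_up l m : is_line V adj l -> reduced_ray (fun k => l (m + Z.of_nat k)%Z).
Proof.
  intros [LA LI]. split; intros k.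
  - replace (m + Z.of_nat (S k))%Z with (m + Z.of_nat k + 1)%Z by lia. apply LA.
  - intros E. apply LI in E. lia.
Qed.

Lemma line_ray_down l m : is_line V adj l -> reduced_ray (fun k => l (m - Z.of_nat k)%Z).
Proof.
  intros [LA LI]. split; intros k.
  - apply adj_sym. replace (m - Z.of_nat k)%Z with (m - Z.of_nat (S k) + 1)%Z by lia. apply LA.
  - intros E. apply LI in E. lia.
Qed.

Section Extension.
Hypothesis no_leaf : forall z u, exists w, adj z w /\ w <> u.

Lemma reduced_path_extends n p a b : reduced_path n p a b -> 1 <= n ->
  exists r, reduced_ray r /\ forall i, i <= n -> r i = p i.
Proof.
  intros [H0 [H1 [HW HN]]] Hn.
  destruct (choice (fun uz w => adj (snd uz) w /\ w <> fst uz) (fun uz => no_leaf (snd uz) (fst uz)))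
    as [nx Hnx].
  set (st := fun k => Nat.iter k (fun uz => (snd uz, nx uz)) (p (n - 1), p n)).
  assert (Hfst : forall k, fst (st (S k)) = snd (st k)) by reflexivity.
  assert (Hsnd : forall k, snd (st (S k)) = nx (st k)) by reflexivity.
  exists (fun i => if i <=? n then p i else snd (st (i - n))). split; [split|].
  - intros i. destruct (Nat.leb_spec i n); destruct (Nat.leb_spec (S i) n); try lia.
    + apply HW; lia.
    + replace i with n by lia. replace (S n - n) with 1 by lia. rewrite Hsnd. apply (Hnx (st 0)).
    + replace (S i - n) with (S (i - n)) by lia. rewrite Hsnd. apply Hnx.
  - intros i. destruct (Nat.leb_spec i n); destruct (Nat.leb_spec (i + 2) n); try lia.
    + apply HN; lia.
    + destruct (Nat.eq_dec i n) as [->|Hin].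
      * replace (n + 2 - n) with 2 by lia. intros E. rewrite Hsnd in E.
        apply (proj2 (Hnx (st 1))). rewrite Hfst. change (snd (st 0)) with (p n). congruence.
      * replace i with (n - 1) by lia. replace (n - 1 + 2 - n) with 1 by lia.
        intros E. rewrite Hsnd in E.
        apply (proj2 (Hnx (st 0))). change (fst (st 0)) with (p (n - 1)). congruence.
    + replace (i + 2 - n) with (S (S (i - n))) by lia. destruct (i - n) as [|k] eqn:Ek; [lia|].
      intros E. rewrite (Hsnd (S (S k))) in E.
      apply (proj2 (Hnx (st (S (S k))))). rewrite Hfst. congruence.
  - intros i Hi. destruct (Nat.leb_spec i n); [reflexivity|lia].
Qed.

Lemma reduced_path_extends_through n p a b w : reduced_path n p a b -> 1 <= n ->
  adj b w -> p (n - 1) <> w ->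
  exists r, reduced_ray r /\ (forall i, i <= n -> r i = p i) /\ forall k, n < k -> halftree b w (r k).
Proof.
  intros Hp Hn Hbw Hw.
  assert (Hq := reduced_path_concat _ _ _ _ _ _ _ Hp (reduced_path_edge b w Hbw) (fun _ _ => Hw)).
  destruct (reduced_path_extends _ _ _ _ Hq ltac:(lia)) as [r [Hr Er]].
  exists r. split; [exact Hr|]. unfold concat_path in Er.
  assert (Ern : r n = b).
  { rewrite Er by lia. destruct (Nat.leb_spec n n); [apply Hp|lia]. }
  assert (ErSn : r (S n) = w).
  { rewrite Er by lia. destruct (Nat.leb_spec (S n) n); [lia|]. replace (S n - n) with 1 by lia. reflexivity. }
  split.
  - intros i Hi. rewrite Er by lia. destruct (Nat.leb_spec i n); [reflexivity|lia].
  - intros k Hk. rewrite <- Ern, <- ErSn. apply reduced_ray_halftree; auto.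
Qed.

End Extension.

Lemma fixes_ray g r : is_aut V adj g -> reduced_ray r -> g (r 0) = r 0 ->
  fixes_end V g r -> forall k, g (r k) = r k.
Proof.
  intros Hg Hr H0 [a [b Hab]] k.
  pose proof (reduced_path_map g _ _ _ _ Hg (reduced_ray_prefix r (a + k) Hr)) as X.
  rewrite H0, Hab in X.
  destruct (reduced_path_unique _ _ _ _ _ _ X (reduced_ray_prefix r (b + k) Hr)) as [E1 E2].
  apply E2. lia.
Qed.

Lemma reduced_path_through_fork r1 r2 A B : reduced_ray r1 -> reduced_ray r2 ->
  r1 0 = r2 0 -> r1 1 <> r2 1 -> 1 <= A -> 1 <= B ->
  reduced_path (A + B) (concat_path A (rev_path A r1) r2) (r1 A) (r2 B).
Proof.
  intros H1 H2 E0 E1 HA HB. apply (reduced_path_concat _ _ _ _ _ (r1 0) _).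
  - apply reduced_path_rev, reduced_ray_prefix, H1.
  - rewrite E0. apply reduced_ray_prefix, H2.
  - intros _ _. unfold rev_path. replace (A - (A - 1)) with 1 by lia. exact E1.
Qed.

Lemma fork_shift_balance g r1 r2 : is_aut V adj g -> reduced_ray r1 -> reduced_ray r2 ->
  r1 0 = r2 0 -> r1 1 <> r2 1 ->
  forall a1 b1 a2 b2, (forall n, g (r1 (a1 + n)) = r1 (b1 + n)) ->
  (forall n, g (r2 (a2 + n)) = r2 (b2 + n)) ->
  a1 + a2 = b1 + b2 /\ (a1 = b1 -> g (r1 0) = r1 0).
Proof.
  intros Hg H1 H2 E0 E1 a1 b1 a2 b2 F1 F2.
  pose proof (reduced_path_through_fork r1 r2 (a1 + 1) (a2 + 1) H1 H2 E0 E1 ltac:(lia) ltac:(lia)) as P.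
  pose proof (reduced_path_map g _ _ _ _ Hg P) as Q. rewrite F1, F2 in Q.
  pose proof (reduced_path_through_fork r1 r2 (b1 + 1) (b2 + 1) H1 H2 E0 E1 ltac:(lia) ltac:(lia)) as P'.
  destruct (reduced_path_unique _ _ _ _ _ _ Q P') as [L M]. split; [lia|].
  intros <-. specialize (M (a1 + 1) ltac:(lia)). unfold concat_path, rev_path in M.
  destruct (Nat.leb_spec (a1 + 1) (a1 + 1)); [|lia]. rewrite Nat.sub_diag in M. exact M.
Qed.

Definition tripod (r1 r2 r3 : nat -> V) : Prop :=
  reduced_ray r1 /\ reduced_ray r2 /\ reduced_ray r3 /\ r1 0 = r2 0 /\ r1 0 = r3 0 /\
  r1 1 <> r2 1 /\ r1 1 <> r3 1 /\ r2 1 <> r3 1.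

Lemma fixes_tripod_center g r1 r2 r3 : is_aut V adj g -> tripod r1 r2 r3 ->
  fixes_end V g r1 -> fixes_end V g r2 -> fixes_end V g r3 -> g (r1 0) = r1 0.
Proof.
  intros Hg [H1 [H2 [H3 [E2 [E3 [D12 [D13 D23]]]]]]] [a1 [b1 F1]] [a2 [b2 F2]] [a3 [b3 F3]].
  (* The three balance equations [ai + aj = bi + bj] force [a1 = b1]. *)
  destruct (fork_shift_balance g r1 r2 Hg H1 H2 E2 D12 a1 b1 a2 b2 F1 F2) as [X12 Y].
  destruct (fork_shift_balance g r1 r3 Hg H1 H3 E3 D13 a1 b1 a3 b3 F1 F3) as [X13 _].
  destruct (fork_shift_balance g r2 r3 Hg H2 H3 ltac:(congruence) D23 a2 b2 a3 b3 F2 F3) as [X23 _].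
  apply Y. lia.
Qed.

Lemma fix_interior_fixes_halftree_ends g : fix_has_interior V adj g ->
  exists v q, adj v q /\ forall r, reduced_ray r -> (forall k, halftree v q (r k)) -> fixes_end V g r.
Proof.
  intros [U [HUo [[r0 [Hr0 HUr0]] HUfix]]].
  destruct (HUo r0 Hr0 HUr0) as [v Hv].
  (* The neighbourhood of [r0] at [v] contains every ray of the half-tree at [v] holding a
     tail of [r0]. *)
  assert (Hm0 : exists m0, forall k, m0 <= k -> r0 k <> v).
  { destruct (classic (exists j, r0 j = v)) as [[j Hj]|N].
    - exists (S j). intros k Hk E. assert (k = j) by (apply (proj2 Hr0); congruence). lia.
    - exists 0. intros k _ E. apply N. eauto. }
  destruct Hm0 as [m0 Hm0]. set (z0 := r0 m0).
  pose proof (geod_reduced v z0) as [G0 [G1 [GW _]]].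
  assert (Hd : 1 <= dist v z0).
  { destruct (dist v z0) eqn:E; [|lia]. exfalso. apply (Hm0 m0); [lia|]. fold z0. congruence. }
  set (q := geod v z0 1).
  assert (Hz0 : halftree v q z0) by (split; auto).
  assert (Hvq : adj v q) by (rewrite <- G0 at 1; apply GW; lia).
  exists v, q. split; [exact Hvq|]. intros r Hr Hin.
  apply HUfix; [apply reduced_ray_is_ray, Hr|]. apply Hv; [apply reduced_ray_is_ray, Hr|].
  exists m0, 0. split; [exact Hm0|]. split.
  - intros k _ E. apply (halftree_irrefl v q). rewrite <- E at 2. apply Hin.
  - apply (walk_in_of_reduced_path _ _ _ _ _ (geod_reduced z0 (r 0))). intros i Hi E.
    apply (halftree_irrefl v q). rewrite <- E at 2.
    exact (halftree_convex v q z0 (r 0) _ _ Hvq Hz0 (Hin 0) (geod_reduced z0 (r 0)) i Hi).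
Qed.

(** * Automorphisms and the group [G] *)

Lemma halftree_preimage a c h hi w : is_aut V adj h -> inverse_pair V h hi ->
  (halftree a c (hi w) <-> halftree (h a) (h c) w).
Proof. intros Ah Ih. rewrite (halftree_aut h a c (hi w) Ah), (proj1 (Ih w)). reflexivity. Qed.

Lemma halftree_preimage_nested_or_covering a c a' c' h hi : adj a c -> adj a' c' ->
  is_aut V adj h -> inverse_pair V h hi ->
  meets (fun w => halftree a c (hi w)) (halftree a' c') ->
  nested_or_covering (fun w => halftree a c (hi w)) (halftree a' c').
Proof.
  intros Hac Hac' Ah Ih [z [Z1 Z2]].
  assert (E := fun w => halftree_preimage a c h hi w Ah Ih).
  destruct (halftree_trichotomy (h a) (h c) a' c') as [X|[X|X]].
  - apply (proj1 (proj1 Ah _ _)), Hac.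
  - exact Hac'.
  - exists z. split; [apply E|]; auto.
  - left. intros w Hw. apply X, E, Hw.
  - right; left. intros w Hw. apply E, X, Hw.
  - right; right. intros w. rewrite E. apply X.
Qed.

Lemma hanging_supports_commute l m p m' p' F1 F2 h hi : is_line V adj l ->
  hanging_edge l m p -> hanging_edge l m' p' -> m <> m' ->
  is_aut V adj F1 -> is_aut V adj F2 -> is_aut V adj h -> inverse_pair V h hi ->
  (forall z, ~ halftree (l m) p z -> F1 z = z) -> (forall z, ~ halftree (l m') p' z -> F2 z = z) ->
  commute V F1 (fun v => h (F1 (hi v))) \/ commute V F1 (fun v => h (F2 (hi v))) \/
  commute V F2 (fun v => h (F1 (hi v))) \/ commute V F2 (fun v => h (F2 (hi v))).
Proof.
  intros Hl Hp Hp' Hmm' A1 A2 Ah Ih S1 S2.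
  set (B1 := halftree (l m) p). set (B2 := halftree (l m') p').
  assert (DB := hanging_halftrees_disjoint l m p m' p' Hl Hp Hp' Hmm').
  assert (HC : forall F F' (B B' : V -> Prop), is_aut V adj F -> is_aut V adj F' ->
            (forall z, ~ B z -> F z = z) -> (forall z, ~ B' z -> F' z = z) ->
            ~ meets (fun w => B' (hi w)) B -> commute V F (fun v => h (F' (hi v)))).
  { intros F F' B B' AF AF' HF HF' N.
    apply (commute_of_disjoint_supports F _ B (fun w => B' (hi w)) HF).
    - intros z Hz. rewrite HF' by exact Hz. apply Ih.
    - intros z [X Y]. apply N. exists z. auto.
    - apply AF.
    - intros u w E. apply (proj1 (proj2 Ah)), (proj1 (proj2 AF')) in E.
      rewrite <- (proj1 (Ih u)), <- (proj1 (Ih w)), E. reflexivity. }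
  assert (T := fun a c a' c' => halftree_preimage_nested_or_covering a c a' c' h hi).
  destruct (exists_disjoint_pair V (fun w => B1 (hi w)) (fun w => B2 (hi w)) (fun w => DB (hi w)) B1 B2 DB
    (ex_intro _ p (halftree_nbr _ _ (proj1 Hp))) (ex_intro _ p' (halftree_nbr _ _ (proj1 Hp')))
    (ex_intro _ (l m) (conj (halftree_irrefl _ _) (hanging_halftree_misses_line l m' p' Hl Hp' m))))
    as [X|[X|[X|X]]]; try (apply T; auto; apply Hp || apply Hp').
  - left. exact (HC F1 F1 B1 B1 A1 A1 S1 S1 X).
  - right; right; left. exact (HC F2 F1 B2 B1 A2 A1 S2 S1 X).
  - right; left. exact (HC F1 F2 B1 B2 A1 A2 S1 S2 X).
  - right; right; right. exact (HC F2 F2 B2 B2 A2 A2 S2 S2 X).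
Qed.

Lemma geod_aut g a b : is_aut V adj g ->
  dist (g a) (g b) = dist a b /\ forall i, i <= dist a b -> geod (g a) (g b) i = g (geod a b i).
Proof.
  intros Hg. destruct (geod_unique _ _ _ _ (reduced_path_map g _ _ _ _ Hg (geod_reduced a b))) as [E1 E2].
  split; auto. intros i Hi. symmetry. auto.
Qed.

Lemma aut_line g l : is_aut V adj g -> is_line V adj l -> is_line V adj (fun n => g (l n)).
Proof.
  intros [HA [HI _]] [LA LI]. split.
  - intros n. apply (proj1 (HA _ _)), LA.
  - intros m n E. apply LI, HI, E.
Qed.

Lemma iter_translation (B : V -> V) (K : Z) (l : Z -> V) (N : nat) (n : Z) :
  (forall n, B (l n) = l (n + K)%Z) -> Nat.iter N B (l n) = l (n + Z.of_nat N * K)%Z.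
Proof.
  intros HB. induction N as [|N IH]; [simpl; f_equal; lia|].
  simpl Nat.iter. rewrite IH, HB. f_equal. lia.
Qed.

Section Group.
Variable G : (V -> V) -> Prop.
Hypothesis HG : is_aut_subgroup V adj G.

Lemma G_aut g : G g -> is_aut V adj g.
Proof. apply HG. Qed.

Lemma G_comp g h : G g -> G h -> G (fun v => g (h v)).
Proof. apply HG. Qed.

Lemma G_inv g : G g -> exists h, G h /\ forall v, h (g v) = v /\ g (h v) = v.
Proof. apply HG. Qed.

Lemma G_iter B k : G B -> G (Nat.iter k B).
Proof.
  intros HB. induction k as [|k IH].
  - exact (proj1 (proj2 HG)).
  - exact (G_comp B (Nat.iter k B) HB IH).
Qed.

Definition G_axis (l : Z -> V) : Prop := exists b, G b /\ is_axis V adj b l.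

Lemma G_axis_line l : G_axis l -> is_line V adj l.
Proof. intros [b [_ [H _]]]. exact H. Qed.

Lemma G_axis_conj g l : G g -> G_axis l -> G_axis (fun n => g (l n)).
Proof.
  intros Hg [b [Hb [Hl [k [Hk Hbk]]]]]. destruct (G_inv g Hg) as [h [Hh Hgh]].
  exists (fun v => g (b (h v))). split; [apply G_comp; [|apply G_comp]; auto|].
  split; [apply aut_line; [apply G_aut|]; auto|].
  exists k. split; [exact Hk|]. intros n. rewrite (proj1 (Hgh _)), Hbk. reflexivity.
Qed.

Lemma G_axis_rev l : G_axis l -> G_axis (fun n => l (- n)%Z).
Proof.
  intros [b [Hb [[LA LI] [k [Hk Hbk]]]]]. exists b. split; [exact Hb|]. split; [split|].
  - intros n. apply adj_sym. pose proof (LA (- (n + 1))%Z) as X.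
    replace (- (n + 1) + 1)%Z with (- n)%Z in X by lia. exact X.
  - intros m n E. apply LI in E. lia.
  - exists (- k)%Z. split; [lia|]. intros n. rewrite Hbk. f_equal. lia.
Qed.

Lemma G_axis_translation l : G_axis l ->
  exists b K, G b /\ (K > 0)%Z /\ forall n, b (l n) = l (n + K)%Z.
Proof.
  intros [b [Hb [Hl [k [Hk Hbk]]]]]. destruct (Z_lt_le_dec 0 k).
  - exists b, k. auto with zarith.
  - destruct (G_inv b Hb) as [h [Hh Hbh]]. exists h, (- k)%Z. split; [exact Hh|]. split; [lia|].
    intros n. rewrite <- (proj1 (Hbh (l (n + - k)%Z))), Hbk. do 2 f_equal. lia.
Qed.

Definition edge_off_axis (q p : V) : Prop :=
  exists l b K m, is_line V adj l /\ G b /\ K <> 0%Z /\ (forall n, b (l n) = l (n + K)%Z) /\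
    l m = q /\ hanging_edge l m p.

Section MinimalGeneralType.
Hypothesis Hmin : minimal_action V adj G.
Hypothesis Hgt : general_type V adj G.

Lemma invariant_subtree_all (P : V -> Prop) : (exists v, P v) ->
  (forall u v, P u -> P v -> walk_in V adj P u v) -> (forall g v, G g -> P v -> P (g v)) ->
  forall v, P v.
Proof.
  intros H1 H2 H3 v. apply NNPP. intros Hv. apply Hmin. exists P. repeat split; eauto.
Qed.

Lemma G_axis_exists : exists l, G_axis l.
Proof. destruct Hgt as [g1 [_ [c1 [_ [H1 [_ [A1 _]]]]]]]. exists c1, g1. auto. Qed.

Lemma no_leaf z u : exists w, adj z w /\ w <> u.
Proof.
  set (P := fun z => exists u w, adj z u /\ adj z w /\ u <> w).
  enough (HP : forall z, P z).
  { destruct (HP z) as [x [w [X [Y Z]]]]. destruct (classic (x = u)) as [->|]; eauto. }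
  apply invariant_subtree_all.
  - destruct G_axis_exists as [l Hl]. destruct (G_axis_line l Hl) as [LA LI].
    exists (l 0%Z), (l 1%Z), (l (-1)%Z). split; [apply LA|split].
    + apply adj_sym. apply (LA (-1)%Z).
    + intros E. apply LI in E. lia.
  - intros u' v Hu Hv. apply (walk_in_of_reduced_path P _ _ u' v (geod_reduced u' v)).
    intros i Hi. destruct (geod_reduced u' v) as [G0 [G1 [GW GN]]].
    destruct (Nat.eq_dec i 0) as [->|Hi0]; [rewrite G0; exact Hu|].
    destruct (Nat.eq_dec i (dist u' v)) as [->|Hin]; [rewrite G1; exact Hv|].
    exists (geod u' v (i - 1)), (geod u' v (S i)). split; [|split].
    + apply adj_sym. pose proof (GW (i - 1) ltac:(lia)) as X.
      replace (S (i - 1)) with i in X by lia. exact X.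
    + apply GW. lia.
    + replace (S i) with (i - 1 + 2) by lia. apply GN. lia.
  - intros g v Hg [x [w [X [Y Z]]]]. destruct (G_aut g Hg) as [HA [HI _]].
    exists (g x), (g w). split; [apply (proj1 (HA _ _)); auto|split; [apply (proj1 (HA _ _)); auto|]].
    intros E. apply Z, HI, E.
Qed.

Definition in_axis_hull (z : V) : Prop :=
  exists l1 l2 m1 m2 i, G_axis l1 /\ G_axis l2 /\ i <= dist (l1 m1) (l2 m2) /\
    geod (l1 m1) (l2 m2) i = z.

Lemma in_axis_hull_geod l1 l2 m1 m2 : G_axis l1 -> G_axis l2 ->
  forall i, i <= dist (l1 m1) (l2 m2) -> in_axis_hull (geod (l1 m1) (l2 m2) i).
Proof. intros A1 A2 i Hi. exists l1, l2, m1, m2, i. auto. Qed.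

Lemma walk_in_axis_hull_to_axis u : in_axis_hull u ->
  exists l m, G_axis l /\ walk_in V adj in_axis_hull u (l m) /\ walk_in V adj in_axis_hull (l m) u.
Proof.
  intros [l1 [l2 [m1 [m2 [i [A1 [A2 [Hi <-]]]]]]]]. exists l1, m1. split; [exact A1|].
  pose proof (reduced_path_prefix _ _ _ _ i (geod_reduced (l1 m1) (l2 m2)) Hi) as R.
  split.
  - apply (walk_in_of_reduced_path _ _ _ _ _ (reduced_path_rev _ _ _ _ R)).
    intros k Hk. apply in_axis_hull_geod; auto. lia.
  - apply (walk_in_of_reduced_path _ _ _ _ _ R). intros k Hk. apply in_axis_hull_geod; auto. lia.
Qed.

Lemma axis_hull_all z : in_axis_hull z.
Proof.
  apply invariant_subtree_all.
  - destruct G_axis_exists as [l Hl]. exists (l 0%Z).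
    exists l, l, 0%Z, 0%Z, 0. repeat split; auto; [lia|apply geod_reduced].
  - intros u v Hu Hv.
    destruct (walk_in_axis_hull_to_axis u Hu) as [l [m [A [Hu1 _]]]].
    destruct (walk_in_axis_hull_to_axis v Hv) as [l' [m' [A' [_ Hv2]]]].
    apply (walk_in_trans _ _ (l m)); [exact Hu1|]. apply (walk_in_trans _ _ (l' m')); [|exact Hv2].
    apply (walk_in_of_reduced_path _ _ _ _ _ (geod_reduced (l m) (l' m'))).
    intros k Hk. apply in_axis_hull_geod; auto.
  - intros g v Hg [l1 [l2 [m1 [m2 [i [A1 [A2 [Hi Ei]]]]]]]].
    destruct (geod_aut g (l1 m1) (l2 m2) (G_aut g Hg)) as [E1 E2].
    exists (fun n => g (l1 n)), (fun n => g (l2 n)), m1, m2, i.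
    split; [apply G_axis_conj; auto|]. split; [apply G_axis_conj; auto|].
    rewrite E1, E2, Ei; auto.
Qed.

Lemma axis_meets_halftree a c : adj a c -> exists l m, G_axis l /\ halftree a c (l m).
Proof.
  intros Hac. destruct (axis_hull_all c) as [l1 [l2 [m1 [m2 [i [A1 [A2 [Hi Ei]]]]]]]].
  destruct (classic (halftree a c (l1 m1))) as [X|X]; [eauto|].
  destruct (classic (halftree a c (l2 m2))) as [Y|Y]; [eauto|].
  exfalso. apply (halftree_irrefl c a). rewrite <- Ei at 2.
  apply (halftree_convex c a (l1 m1) (l2 m2) (dist (l1 m1) (l2 m2)) _ (adj_sym _ _ Hac)); [| |apply geod_reduced|exact Hi];
    apply (halftree_compl c a _ (adj_sym _ _ Hac)); intros Z; contradiction.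
Qed.

Lemma axis_inside_or_through_edge a c : adj a c ->
  (exists l, G_axis l /\ forall n, halftree a c (l n)) \/
  (exists L J, G_axis L /\ L J = a /\ L (J + 1)%Z = c).
Proof.
  intros Hac. destruct (axis_meets_halftree a c Hac) as [l [m [Al Hlm]]].
  destruct (classic (forall n, halftree a c (l n))) as [All|NAll]; [left; eauto|right].
  apply not_all_ex_not in NAll. destruct NAll as [n Hn].
  destruct (line_crosses_edge a c l m n Hac (G_axis_line l Al) Hlm Hn) as [j [[E1 E2]|[E1 E2]]].
  - exists l, j. auto.
  - exists (fun s => l (- s)%Z), (- (j + 1))%Z. split; [apply G_axis_rev, Al|].
    rewrite Z.opp_involutive. split; [exact E1|]. rewrite <- E2. f_equal. lia.
Qed.

Lemma axis_avoiding_end (e : nat -> V) :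
  exists l, G_axis l /\ ~ ray_equiv V e (line_plus V l) /\ ~ ray_equiv V e (line_minus V l).
Proof.
  destruct Hgt as [g1 [g2 [c1 [c2 [Hg1 [Hg2 [Ac1 [Ac2 Hends]]]]]]]].
  assert (Hsym : forall r r', ray_equiv V r r' -> ray_equiv V r' r).
  { intros r r' [a [b H]]. exists b, a. intros n. symmetry. apply H. }
  destruct (classic (ray_equiv V e (line_plus V c1) \/ ray_equiv V e (line_minus V c1))) as [N1|N1];
    [|exists c1; split; [exists g1|]; auto].
  destruct (classic (ray_equiv V e (line_plus V c2) \/ ray_equiv V e (line_minus V c2))) as [N2|N2];
    [|exists c2; split; [exists g2|]; auto].
  exfalso. destruct N1 as [N1|N1]; destruct N2 as [N2|N2];
    (eapply Hends; [| |eapply ray_equiv_trans; [apply Hsym; exact N1|exact N2]]); auto.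
Qed.

Lemma axis_inside_of_axis_through_edge L J : G_axis L ->
  exists l, G_axis l /\ forall n, halftree (L J) (L (J + 1)%Z) (l n).
Proof.
  intros AL. pose proof (G_axis_line L AL) as HL.
  destruct (G_axis_translation L AL) as [B [K [HB [HK HBK]]]].
  destruct (axis_avoiding_end (line_minus V L)) as [l' [Al' [Hp Hm]]].
  assert (HM : exists M, forall n, halftree (L M) (L (M + 1)%Z) (l' n)).
  { apply NNPP. intros N.
    destruct (line_escaping_halftrees_shares_end L l' HL (G_axis_line l' Al')) as [X|X]; auto.
    intros M. apply NNPP. intros Y. apply N. exists M. intros n. apply NNPP. intros Z. eauto. }
  destruct HM as [M HM].
  set (k := Z.to_nat (Z.abs (J - M))).
  exists (fun s => Nat.iter k B (l' s)). split; [apply G_axis_conj; [apply G_iter|]; auto|].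
  intros s. apply line_halftree_mono with (M + Z.of_nat k * K)%Z; [exact HL|unfold k; nia|].
  pose proof (proj1 (halftree_aut (Nat.iter k B) _ _ _ (G_aut _ (G_iter B k HB))) (HM s)) as X.
  rewrite !(iter_translation B K L k) in X by exact HBK.
  replace (M + 1 + Z.of_nat k * K)%Z with (M + Z.of_nat k * K + 1)%Z in X by lia. exact X.
Qed.

Lemma axis_in_halftree a c : adj a c -> exists l, G_axis l /\ forall n, halftree a c (l n).
Proof.
  intros Hac. destruct (axis_inside_or_through_edge a c Hac) as [H|[L [J [AL [<- <-]]]]]; [exact H|].
  exact (axis_inside_of_axis_through_edge L J AL).
Qed.

Lemma halftree_tripod a c : adj a c -> exists r1 r2 r3, tripod r1 r2 r3 /\
  forall k, halftree a c (r1 k) /\ halftree a c (r2 k) /\ halftree a c (r3 k).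
Proof.
  intros Hac.
  (* The branch vertex is the projection to an axis [l2] lying beyond the projection [x]
     of [a] to an axis [l1]; the third ray returns to [x] and follows [l1] backwards. *)
  destruct (axis_in_halftree a c Hac) as [l1 [A1 H1]]. pose proof (G_axis_line _ A1) as L1.
  destruct (exists_closest l1 a) as [n1 Hn1].
  assert (Hprev : adj (l1 n1) (l1 (n1 - 1)%Z)).
  { apply adj_sym. pose proof (proj1 L1 (n1 - 1)%Z) as X. replace (n1 - 1 + 1)%Z with n1 in X by lia.
    exact X. }
  set (x := l1 n1) in *. set (e := l1 (n1 + 1)%Z).
  destruct (axis_in_halftree x e (proj1 L1 n1)) as [l2 [A2 H2]]. pose proof (G_axis_line _ A2) as L2.
  destruct (exists_closest l2 x) as [n2 Hn2]. set (y := l2 n2) in *.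
  assert (Hyx : y <> x) by (intros E; apply (halftree_irrefl x e); rewrite <- E at 2; apply H2).
  destruct (closest_geod_off_line l2 x n2 Hn2 Hyx) as [Hd Hoff]. fold y in Hd, Hoff.
  assert (Hsub_e := closest_halftree_inside a c l1 n1 (n1 + 1)%Z Hac L1 H1 Hn1 (proj1 L1 n1)).
  assert (Hy : halftree a c y) by (apply Hsub_e, H2).
  assert (Hjunction : geod y x (dist y x - 1) <> l1 (n1 - 1)%Z).
  { destruct (geod_sym x y) as [Ed Eg]. rewrite Ed, Eg by lia.
    replace (dist x y - (dist x y - 1)) with 1 by lia.
    assert (Hxy := proj2 (H2 n2)). fold y in Hxy. rewrite Hxy.
    intros E. apply (proj2 L1) in E. lia. }
  destruct (reduced_path_extends_through no_leaf _ _ _ _ _ (geod_reduced y x) Hd Hprev Hjunction)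
    as [r3 [R3 [E3 T3]]].
  pose proof (geod_reduced y x) as [G0 _].
  exists (fun k => l2 (n2 + Z.of_nat k)%Z), (fun k => l2 (n2 - Z.of_nat k)%Z), r3.
  split; [refine (conj _ (conj _ (conj _ (conj _ (conj _ (conj _ (conj _ _)))))))|].
  - apply line_ray_up, L2.
  - apply line_ray_down, L2.
  - exact R3.
  - f_equal; lia.
  - rewrite E3, G0 by lia. unfold y. simpl. f_equal; lia.
  - intros E. apply (proj2 L2) in E. lia.
  - rewrite E3 by lia. intros E. apply (Hoff _ (eq_sym E)).
  - rewrite E3 by lia. intros E. apply (Hoff _ (eq_sym E)).
  - intros k. split; [|split].
    + apply Hsub_e, H2.
    + apply Hsub_e, H2.
    + destruct (Nat.le_gt_cases k (dist y x)) as [Hk|Hk].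
      * rewrite E3 by exact Hk. exact (halftree_convex a c y x _ _ Hac Hy (H1 n1) (geod_reduced y x) k Hk).
      * apply (closest_halftree_inside a c l1 n1 (n1 - 1)%Z Hac L1 H1 Hn1 Hprev), T3, Hk.
Qed.

Lemma fixes_halftree_of_fixed_ends g a c : is_aut V adj g -> adj a c ->
  (forall r, reduced_ray r -> (forall k, halftree a c (r k)) -> fixes_end V g r) ->
  exists y w, adj y w /\ forall z, halftree y w z -> g z = z.
Proof.
  intros Hg Hac Hfix.
  destruct (halftree_tripod a c Hac) as [r1 [r2 [r3 [Htri Hin]]]].
  assert (Hy : g (r1 0) = r1 0)
    by (apply (fixes_tripod_center g r1 r2 r3 Hg Htri); apply Hfix; try apply Htri; intros k; apply Hin).
  destruct Htri as [R1 [R2 [_ [E12 [_ [D12 _]]]]]].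
  set (y := r1 0) in *.
  assert (Hdir : exists r, reduced_ray r /\ r 0 = y /\ (forall k, halftree a c (r k)) /\ r 1 <> geod y a 1).
  { destruct (classic (r1 1 = geod y a 1)) as [E|E].
    - exists r2. split; [exact R2|split; [auto|split; [intros k; apply Hin|congruence]]].
    - exists r1. split; [exact R1|split; [reflexivity|split; [intros k; apply Hin|exact E]]]. }
  destruct Hdir as [r [Hr [Hr0 [Hrin Hr1]]]].
  assert (Hyw : adj y (r 1)) by (rewrite <- Hr0; apply Hr).
  assert (Hsub : forall z, halftree y (r 1) z -> halftree a c z).
  { apply (halftree_subset_inner a c y (r 1) Hac Hyw); [rewrite <- Hr0; apply Hrin|apply Hrin|].
    intros X. apply (halftree_iff _ _ _ _ _ (geod_reduced y a)) in X. apply Hr1. symmetry. apply X. }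
  exists y, (r 1). split; [exact Hyw|]. intros z Hz.
  destruct (reduced_path_extends no_leaf _ _ _ _ (geod_reduced y z) (proj1 Hz)) as [s [Hs Es]].
  pose proof (geod_reduced y z) as [G0 [G1 _]].
  assert (Hs0 : s 0 = y) by (rewrite Es, G0 by lia; reflexivity).
  assert (Hs1 : s 1 = r 1) by (rewrite Es by apply Hz; apply Hz).
  rewrite <- G1, <- Es by lia. apply (fixes_ray g s Hg Hs); [congruence|].
  apply Hfix; [exact Hs|]. intros [|k]; [rewrite Hs0, <- Hr0; apply Hrin|].
  apply Hsub. rewrite <- Hs0, <- Hs1. apply reduced_ray_halftree; [exact Hs|lia].
Qed.

Lemma halftree_complement_off_axis y w : adj y w ->
  exists q p, edge_off_axis q p /\ forall z, ~ halftree q p z -> halftree y w z.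
Proof.
  intros Hyw. destruct (axis_in_halftree y w Hyw) as [l [[b [Hb [Hl [K [HK HbK]]]]] Hin]].
  destruct (exists_closest l y) as [m Hm].
  assert (Hmy : l m <> y) by (intros E; apply (halftree_irrefl y w); rewrite <- E at 2; apply Hin).
  destruct (closest_geod_off_line l y m Hm Hmy) as [Hd Hoff].
  assert (Hadj : adj (l m) (geod (l m) y 1)).
  { destruct (geod_reduced (l m) y) as [G0 [_ [GW _]]]. rewrite <- G0 at 1. apply GW. lia. }
  exists (l m), (geod (l m) y 1). split.
  - exists l, b, K, m. exact (conj Hl (conj Hb (conj HK (conj HbK (conj eq_refl (conj Hadj Hoff)))))).
  - intros z Hz. apply NNPP. intros Nz. exact (Hz (geod_first_step_outside y w (l m) z Hyw (Hin m) Nz)).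
Qed.

Lemma fix_interior_support g : G g -> fix_has_interior V adj g ->
  exists q p, edge_off_axis q p /\ forall z, ~ halftree q p z -> g z = z.
Proof.
  intros Hg Hint.
  destruct (fix_interior_fixes_halftree_ends g Hint) as [v [q [Hvq Hends]]].
  destruct (fixes_halftree_of_fixed_ends g v q (G_aut g Hg) Hvq Hends) as [y [w [Hyw Hfix]]].
  destruct (halftree_complement_off_axis y w Hyw) as [q' [p [Hoff Hout]]].
  exists q', p. split; [exact Hoff|]. intros z Hz. apply Hfix, Hout, Hz.
Qed.

End MinimalGeneralType.

Lemma translate_hanging_edge l b b' K m p : is_aut V adj b -> inverse_pair V b b' ->
  (forall n, b (l n) = l (n + K)%Z) -> hanging_edge l m p -> hanging_edge l (m + K) (b p).
Proof.
  intros Ab Ib HbK [Hp Hoff]. split.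
  - rewrite <- HbK. apply (proj1 (proj1 Ab _ _)), Hp.
  - intros n E. apply (Hoff (n - K)%Z). rewrite <- (proj2 (Ib p)), E.
    apply (inverse_pair_shift V b b' l K Ib HbK).
Qed.

Lemma mixed_identity_of_support_off_axis g q p : G g -> nontriv V g -> edge_off_axis q p ->
  (forall z, ~ halftree q p z -> g z = z) -> satisfies_nontrivial_mixed_identity V G.
Proof.
  intros Hg [v0 Hv0] [l [b [K [m [Hl [Hb [HK [HbK [<- Hp]]]]]]]]] Hsupp.
  destruct (G_inv g Hg) as [g' [Hg' Igg']]. destruct (G_inv b Hb) as [b' [Hb' Ibb']].
  assert (I1 : inverse_pair V g g') by (intros z; split; apply Igg').
  assert (Ib : inverse_pair V b b') by (intros z; split; apply Ibb').
  pose proof (G_aut b Hb) as Ab.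
  (* [F1 = g] and [F2 = b g b^-1] are supported in [H] and [bH]; [T = b], [S = b^2]. *)
  set (F2 := fun v => b (g (b' v))). set (F2' := fun v => b (g' (b' v))).
  assert (I2 : inverse_pair V F2 F2').
  { apply (inverse_pair_comp V b b' (fun v => g (b' v)) (fun v => b (g' v)) Ib).
    apply (inverse_pair_comp V g g' b' b I1). intros z. split; apply Ib. }
  assert (GF2 : G F2) by (unfold F2; apply G_comp; [exact Hb|apply G_comp; auto]).
  assert (GF2' : G F2') by (unfold F2'; apply G_comp; [exact Hb|apply G_comp; auto]).
  assert (Fix1 : forall n, g (l n) = l n) by (intros n; apply Hsupp, hanging_halftree_misses_line, Hp; exact Hl).
  assert (Fix2 : forall n, F2 (l n) = l n).
  { intros n. unfold F2. rewrite (inverse_pair_shift V b b' l K Ib HbK), Fix1, HbK. f_equal. lia. }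
  set (w := law V g g' F2 F2' b b' (fun v => b (b v)) (fun v => b' (b' v))).
  assert (Hover : word_over V G w).
  { apply law_over; [apply HG|exact G_comp|exact Hg|exact Hg'|exact GF2|exact GF2'|exact Hb|exact Hb'
                   |apply G_comp; auto|apply G_comp; auto]. }
  exists (fst w), (snd w). split; [apply Hover|]. split; [apply Hover|]. split.
  - apply (law_reduced V g g' F2 F2' b b' _ _ l K HK (proj2 Hl) I1 I2 Ib (inverse_pair_comp V b b' b b' Ib Ib)
      Fix1 Fix2 HbK).
    + intros n. rewrite !HbK. f_equal. lia.
    + exists v0. exact Hv0.
    + exists (b v0). unfold F2. rewrite (proj2 (Ib v0)). intros E. apply (proj1 (proj2 Ab)) in E. auto.
  - split; [left; cbn; discriminate|].
    intros h hi Gh Ghi Hhi v.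
    apply (law_trivial V g g' F2 F2' b b' _ _ h hi I1 I2 Ib (inverse_pair_comp V b b' b b' Ib Ib) Hhi).
    apply (hanging_supports_commute l m p (m + K)%Z (b p) g F2 h hi Hl Hp
             (translate_hanging_edge l b b' K m p Ab Ib HbK Hp) ltac:(lia)
             (G_aut g Hg) (G_aut F2 GF2) (G_aut h Gh) Hhi Hsupp).
    intros z Hz. unfold F2. rewrite Hsupp; [apply Ib|]. rewrite <- HbK in Hz.
    intros X. apply Hz, (halftree_preimage (l m) p b b' z Ab Ib), X.
Qed.

End Group.
End Tree.

Theorem proposition3p7 (V : Type) (adj : V -> V -> Prop)
  (G : (V -> V) -> Prop) :
  is_tree V adj ->
  is_aut_subgroup V adj G ->
  minimal_action V adj G ->
  general_type V adj G ->
  ~ topologically_free V adj G ->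
  satisfies_nontrivial_mixed_identity V G.
Proof.
  intros [_ [Hsym [Hirr [Hconn Hcirc]]]] HG Hmin Hgt Hntf.
  assert (Hg : exists g, G g /\ nontriv V g /\ fix_has_interior V adj g).
  { apply NNPP. intros N. apply Hntf. intros g Hg Hn Hf. apply N. eauto. }
  destruct Hg as [g [Hg [Hnt Hint]]].
  destruct (fix_interior_support V adj Hsym Hirr Hconn Hcirc G HG Hmin Hgt g Hg Hint)
    as [q [p [Hqp Hsupp]]].
  exact (mixed_identity_of_support_off_axis V adj Hsym Hconn Hcirc G HG g q p Hg Hnt Hqp Hsupp).
Qed.
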